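(* In the balanced case $\beta_0=C$ with $A>0$ (any sign of $\Delta$), locally uniformly in $\theta\in\mathbb{R}$, \[ \frac1n\log\frac{P_n(e^\theta)}{P_n(1)}\longrightarrow F(\theta)=\log\frac{\tau(1)}{\tau(e^\theta)}\qquad (n\to\infty). \]
   Context: Weighted Motzkin model: fix nonnegative integers $a,b,c,\alpha_0,\beta_0,\gamma_0$, $\alpha_k=ak+\alpha_0$, $\beta_k=bk+\beta_0$, $\gamma_k=ck+\gamma_0$; $w_{0,0}=1$, $w_{n,k}=0$ for $k<0$ or $k>n$, $w_{n+1,k}=\alpha_{k-1}w_{n,k-1}+\gamma_k w_{n,k}+\beta_k w_{n,k+1}$. $A=a$, $B=c$, $C=b$, $\Delta=B^2-4AC$; balanced means $\beta_0=C$. $P_n(x)=\sum_k w_{n,k}x^k$. The singular time $\tau(x)$ (for $x>0$) is: $\frac{1}{A(r_2-r_1)}\log\frac{x-r_1}{x-r_2}$ for $\Delta>0$ ($r_{1,2}=\frac{-B\pm\sqrt\Delta}{2A}$, $r_1<r_2$); $\frac{1}{A(x-r)}$ for $\Delta=0$ ($r=-B/(2A)$); $\frac{\pi/2-\arctan((x-p)/q)}{Aq}$ for $\Delta<0$ ($p=-B/(2A)$, $q=\sqrt{-\Delta}/(2A)$). *)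

From Stdlib Require Import Reals Lra Lia.
Open Scope R_scope.

(* Weighted Motzkin numbers w_{n,k} with alpha_k = a k + alpha0,
   beta_k = b k + beta0, gamma_k = c k + gamma0 (all nonnegative integers).
   w_{n,k} = 0 for k < 0 is built in (k : nat; the k = 0 case has no
   alpha-term), and w_{n,k} = 0 for k > n follows from w_{0,k} = 0 for k > 0. *)
Fixpoint wM (a b c al0 be0 ga0 : nat) (n k : nat) : nat :=
  match n with
  | O => match k with O => 1%nat | S _ => 0%nat end
  | S m =>
      (match k with
       | O => 0%nat
       | S j => ((a * j + al0) * wM a b c al0 be0 ga0 m j)%nat
       end
       + (c * k + ga0) * wM a b c al0 be0 ga0 m k
       + (b * k + be0) * wM a b c al0 be0 ga0 m (S k))%nat
  end.

Definition Pn (a b c al0 be0 ga0 : nat) (n : nat) (x : R) : R :=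
  sum_f_R0 (fun k => INR (wM a b c al0 be0 ga0 n k) * x ^ k) n.

Definition tau (A B C : R) (x : R) : R :=
  let D := B ^ 2 - 4 * A * C in
  if Rlt_dec 0 D then
    let r1 := (- B - sqrt D) / (2 * A) in
    let r2 := (- B + sqrt D) / (2 * A) in
    / (A * (r2 - r1)) * ln ((x - r1) / (x - r2))
  else if Req_EM_T D 0 then
    let r := - B / (2 * A) in
    / (A * (x - r))
  else
    let p := - B / (2 * A) in
    let q := sqrt (- D) / (2 * A) in
    (PI / 2 - atan ((x - p) / q)) / (A * q).

From Stdlib Require Import Reals Lra Lia ZArith.
From Coquelicot Require Import Coquelicot.
Open Scope R_scope.

(* The polynomials satisfy [P_(n+1) = Q P_n' + L P_n] with [Q y = a y^2 + c y + b] and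
   [L y = alpha0 y + gamma0], while the singular time solves [tau' = -1/Q].  Hence the exponential
   generating function [sum_k P_(n+k)(z) T^k / k!] is transported along the characteristics
   [T = tau z - tau Y].  A Gronwall bound along them gives
   [P_m(x) (tau x - tau Y)^m / m! <= exp (L(Y) (tau x - tau Y))], and [Y -> oo] yields
   [limsup (1/n) log (P_n(x) / n!) <= - log tau(x)].  Conversely, the series started at [x] must
   reach [P_p(Y) >= a^(p-1) (p-1)! Y^p]; as its negative binomial weights [C(p+k,k) r^k]
   concentrate near [k = p r / (1 - r)], some index [m ~ p / (1 - r)] has [P_m(x) / m! >= rho^m]
   for any [rho < 1 / tau(x)], and [P_(k+1) <= (k+1) (Q/x + L) P_k] spreads this to every large
   [n].  So [(1/n) log (P_n(x) / n!) -> - log tau(x)] pointwise, the convergence is locally uniform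
   because both sides are monotone in [x], and the theorem is the difference of the limits at
   [e^theta] and at [1]. *)

Lemma sum_f_R0_zero_tail (f : nat -> R) (n N : nat) :
  (forall k, (n < k)%nat -> f k = 0) -> (n <= N)%nat ->
  sum_f_R0 f N = sum_f_R0 f n.
Proof.
  intros Hf HN. induction HN as [|N HN IH]; auto.
  rewrite tech5, IH, Hf; [ring|lia].
Qed.

Lemma sum_f_R0_shift (f : nat -> R) (n : nat) :
  sum_f_R0 f (S n) = f 0%nat + sum_f_R0 (fun i => f (S i)) n.
Proof. rewrite decomp_sum; [reflexivity|lia]. Qed.

Lemma sum_f_R0_term_le (f : nat -> R) (n k : nat) :
  (forall j, 0 <= f j) -> (k <= n)%nat -> f k <= sum_f_R0 f n.
Proof.
  intros Hf Hk. induction Hk as [|n Hk IH].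
  - destruct k; simpl; [lra|].
    pose proof (cond_pos_sum f k Hf). lra.
  - simpl. pose proof (Hf (S n)). lra.
Qed.

Lemma is_derive_sum_f_R0 (f df : nat -> R -> R) (N : nat) (z : R) :
  (forall k, is_derive (f k) z (df k z)) ->
  is_derive (fun z => sum_f_R0 (fun k => f k z) N) z (sum_f_R0 (fun k => df k z) N).
Proof.
  intros Hf. induction N as [|N IH]; [apply Hf|].
  apply (is_derive_plus (fun z => sum_f_R0 (fun k => f k z) N) (f (S N))); auto.
Qed.

Lemma is_derive_sum_pow (cf : nat -> R) (N : nat) (y : R) :
  is_derive (fun y => sum_f_R0 (fun k => cf k * y ^ k) N) y
            (sum_f_R0 (fun k => INR k * cf k * y ^ (k - 1)) N).
Proof.
  induction N.
  - simpl. auto_derive; auto. simpl. ring.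
  - simpl. apply (is_derive_plus (fun y => sum_f_R0 (fun k => cf k * y ^ k) N) (fun y => cf (S N) * y ^ S N)).
    + exact IHN.
    + auto_derive; auto. replace (S N - 1)%nat with N by lia. rewrite Nat.sub_0_r. ring.
Qed.

Lemma le_of_derive_nonneg (f df : R -> R) (x y : R) : x <= y ->
  (forall z, x <= z <= y -> is_derive f z (df z)) ->
  (forall z, x <= z <= y -> 0 <= df z) -> f x <= f y.
Proof.
  intros Hxy Hd Hpos. destruct (Req_dec x y) as [->|Hne]; [lra|].
  destruct (MVT_gen f x y df) as [z [Hz Heq]].
  - intros z Hz. rewrite Rmin_left, Rmax_right in Hz by lra. apply Hd; lra.
  - intros z Hz. rewrite Rmin_left, Rmax_right in Hz by lra.
    apply continuity_pt_filterlim.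
    apply (ex_derive_continuous (K:=R_AbsRing) (V:=R_NormedModule) f z).
    exists (df z). apply Hd; lra.
  - rewrite Rmin_left, Rmax_right in Hz by lra.
    assert (0 <= df z * (y - x)) by (apply Rmult_le_pos; [apply Hpos; lra| lra]). lra.
Qed.

Lemma sub_le_of_derive_le (f df : R -> R) (x y B : R) : x <= y ->
  (forall z, x <= z <= y -> is_derive f z (df z)) ->
  (forall z, x <= z <= y -> df z <= B) -> f y - f x <= B * (y - x).
Proof.
  intros Hxy Hd Hb.
  enough (B * x - f x <= B * y - f y) by lra.
  apply (le_of_derive_nonneg (fun z => B * z - f z) (fun z => B - df z)); auto.
  - intros z Hz. apply (is_derive_minus (fun z => B * z) f); [|apply Hd; auto].
    auto_derive; auto. ring.
  - intros z Hz. specialize (Hb z Hz). lra.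
Qed.

Lemma exp_le_mono x y : x <= y -> exp x <= exp y.
Proof.
  intros H. destruct (Rle_lt_or_eq_dec _ _ H) as [H'|H']; [left; apply exp_increasing; auto| rewrite H'; lra].
Qed.

Lemma pow_eq_exp_ln x n : 0 < x -> x ^ n = exp (INR n * ln x).
Proof. intros Hx. rewrite <- Rpower_pow by auto. reflexivity. Qed.

Lemma pow_le_exp r z k : 0 <= r -> r <= exp z -> r ^ k <= exp (z * INR k).
Proof.
  intros Hr Hz. induction k.
  - simpl. rewrite Rmult_0_r, exp_0. lra.
  - rewrite S_INR. replace (z * (INR k + 1)) with (z * INR k + z) by ring. rewrite exp_plus.
    simpl. rewrite Rmult_comm. apply Rmult_le_compat; auto. apply pow_le; auto.
Qed.

Lemma pow_div_distr x y n : y <> 0 -> (x / y) ^ n = x ^ n / y ^ n.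
Proof.
  intros Hy. induction n; simpl; [field|]. rewrite IHn. field. split; auto. apply pow_nonzero; auto.
Qed.

Lemma exp_ge_sqr_div_4 x : 0 <= x -> x ^ 2 / 4 <= exp x.
Proof.
  intros Hx. replace (exp x) with (exp (x / 2) * exp (x / 2)) by (rewrite <- exp_plus; f_equal; field).
  pose proof (exp_ineq1_le (x / 2)). nra.
Qed.

Lemma pow_add_ge_bernoulli (z d : R) (k : nat) : 0 <= z -> 0 <= d ->
  z ^ k + INR k * d * z ^ (k - 1) <= (z + d) ^ k.
Proof.
  intros Hz Hd. destruct k as [|k]; [simpl; lra|].
  replace (S k - 1)%nat with k by lia. induction k.
  - simpl. lra.
  - rewrite !S_INR in *. cbn [pow] in *.
    assert (0 <= z ^ k) by (apply pow_le; auto).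
    assert (0 <= INR k) by apply pos_INR.
    assert (0 <= d * d * z ^ k * (INR k + 1)) by (repeat apply Rmult_le_pos; lra).
    assert ((z + d) * (z * z ^ k + (INR k + 1) * d * z ^ k) <= (z + d) * ((z + d) * (z + d) ^ k))
      by (apply Rmult_le_compat_l; lra).
    nra.
Qed.

Lemma ln_le_sub_1 u : 0 < u -> ln u <= u - 1.
Proof.
  intros Hu. rewrite <- (ln_exp (u - 1)). apply ln_le; auto.
  pose proof (exp_ineq1_le (u - 1)). lra.
Qed.

Lemma ln_ge_1_sub_inv u : 0 < u -> 1 - / u <= ln u.
Proof.
  intros Hu. pose proof (ln_le_sub_1 (/ u) (Rinv_0_lt_compat _ Hu)) as H.
  rewrite ln_Rinv in H by auto. lra.
Qed.

Lemma ln_1_plus_ge v : 0 <= v -> v - v ^ 2 / 2 <= ln (1 + v).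
Proof.
  intros Hv.
  enough (0 - 0 + 0 ^ 2 / 2 <= ln (1 + v) - v + v ^ 2 / 2) by (simpl in H; lra).
  rewrite <- ln_1 at 1. rewrite <- (Rplus_0_r 1) at 1.
  apply (le_of_derive_nonneg (fun t => ln (1 + t) - t + t ^ 2 / 2) (fun t => t ^ 2 / (1 + t))); auto.
  - intros t Ht. auto_derive; [lra|]. field. lra.
  - intros t Ht. apply Rmult_le_pos; [apply pow2_ge_0| left; apply Rinv_0_lt_compat; lra].
Qed.

Lemma atan_le_id z : 0 <= z -> atan z <= z.
Proof.
  intros Hz. enough (0 - atan 0 <= z - atan z) by (rewrite atan_0 in H; lra).
  apply (le_of_derive_nonneg (fun t => t - atan t) (fun t => 1 - / (1 + t ^ 2))); auto.
  - intros t _. apply (is_derive_minus (fun t => t) atan); [auto_derive; auto|].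
    pose proof (is_derive_atan t) as H. unfold Rsqr in H. simpl. rewrite Rmult_1_r. exact H.
  - intros t _. assert (1 <= 1 + t ^ 2) by (pose proof (pow2_ge_0 t); lra).
    assert (/ (1 + t ^ 2) <= 1) by (rewrite <- Rinv_1; apply Rinv_le_contravar; lra). lra.
Qed.

Lemma atan_ge_div z : 0 <= z -> z / (1 + z ^ 2) <= atan z.
Proof.
  intros Hz.
  enough (atan 0 - 0 / (1 + 0 ^ 2) <= atan z - z / (1 + z ^ 2)) by (rewrite atan_0 in H; lra).
  apply (le_of_derive_nonneg (fun t => atan t - t / (1 + t ^ 2)) (fun t => 2 * t ^ 2 / (1 + t ^ 2) ^ 2));
    auto; intros t _; assert (0 < 1 + t ^ 2) by (pose proof (pow2_ge_0 t); lra).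
  - auto_derive; [simpl in *; lra|]. simpl in *. field. lra.
  - apply Rmult_le_pos; [pose proof (pow2_ge_0 t); lra|].
    apply Rlt_le, Rinv_0_lt_compat, pow_lt; lra.
Qed.

Lemma nat_ceil r : 0 <= r -> exists p : nat, r < INR p <= r + 1.
Proof.
  intros Hr. destruct (archimed r) as [H1 H2].
  exists (Z.to_nat (up r)). rewrite INR_IZR_INZ, Z2Nat.id; [lra|]. apply le_IZR. lra.
Qed.

Lemma nat_above r : exists N : nat, r < INR N.
Proof.
  destruct (nat_ceil (Rabs r) (Rabs_pos r)) as [p [Hp _]]. exists p. pose proof (Rle_abs r). lra.
Qed.

Lemma mul_exp_neg_lt_1 (K c : R) : 0 < c ->
  exists p0, forall p, (p0 <= p)%nat -> K * INR p * exp (- INR p * c) < 1.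
Proof.
  intros Hc. assert (Hc2 : 0 < c ^ 2) by (apply pow_lt; lra).
  assert (HK0 : 0 <= Rabs K * 16 / c ^ 2)
    by (apply Rmult_le_pos; [pose proof (Rabs_pos K); lra| apply Rlt_le, Rinv_0_lt_compat; lra]).
  destruct (nat_above (Rabs K * 16 / c ^ 2)) as [p0 Hp0].
  exists p0. intros p Hp. apply le_INR in Hp.
  assert (HE := exp_ge_sqr_div_4 (INR p * c) ltac:(apply Rmult_le_pos; lra)).
  rewrite <- Ropp_mult_distr_l, exp_Ropp.
  assert (0 < exp (INR p * c)) by apply exp_pos.
  apply Rle_lt_trans with (Rabs K * INR p * / exp (INR p * c)).
  { apply Rmult_le_compat_r; [left; apply Rinv_0_lt_compat; auto|].
    apply Rmult_le_compat_r; [lra| apply Rle_abs]. }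
  apply Rmult_lt_reg_r with (exp (INR p * c)); auto. field_simplify; [|lra].
  apply Rlt_le_trans with ((INR p * c) ^ 2 / 4); [|lra].
  apply Rmult_lt_reg_r with (/ INR p * 4 / c ^ 2).
  { apply Rmult_lt_0_compat; [apply Rmult_lt_0_compat; [apply Rinv_0_lt_compat; lra| lra]|].
    apply Rinv_0_lt_compat; lra. }
  field_simplify; lra.
Qed.

Lemma window_index_bounds lam u p0 n : 0 < lam -> 0 < u <= 1 / 4 -> lam * INR p0 < INR n ->
  exists p, (p0 <= p)%nat /\ forall m, lam * INR p * (1 - u) < INR m < lam * INR p * (1 + u) ->
    INR n < INR m <= INR n * (1 + 8 * u / 3) + 2 * lam.
Proof.
  intros Hlam Hu Hn. pose proof (pos_INR p0).
  assert (H1u : 0 < lam * (1 - u)) by (apply Rmult_lt_0_compat; lra).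
  destruct (nat_ceil (INR n / (lam * (1 - u)))) as [p [Hp1 Hp2]]; [apply Rdiv_le_0_compat; [apply pos_INR| lra]|].
  exists p. split.
  { apply INR_le. apply Rle_trans with (INR n / lam).
    - apply Rmult_le_reg_r with lam; auto. field_simplify; lra.
    - apply Rle_trans with (INR n / (lam * (1 - u))); [|lra].
      apply Rmult_le_compat_l; [apply pos_INR|]. apply Rinv_le_contravar; auto. nra. }
  intros m [Hm1 Hm2]. split.
  - eapply Rle_lt_trans; [|exact Hm1].
    apply Rmult_lt_compat_r with (r := lam * (1 - u)) in Hp1; auto.
    replace (INR n / (lam * (1 - u)) * (lam * (1 - u))) with (INR n) in Hp1 by (field; lra). lra.
  - assert (INR m < lam * (INR n / (lam * (1 - u)) + 1) * (1 + u)).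
    { eapply Rlt_le_trans; [exact Hm2|]. apply Rmult_le_compat_r; [lra|]. apply Rmult_le_compat_l; lra. }
    replace (lam * (INR n / (lam * (1 - u)) + 1) * (1 + u)) with (INR n * ((1 + u) / (1 - u)) + lam * (1 + u))
      in H0 by (field; lra).
    assert ((1 + u) / (1 - u) <= 1 + 8 * u / 3).
    { apply Rmult_le_reg_r with (1 - u); [lra|]. field_simplify; [|lra]. nra. }
    assert (INR n * ((1 + u) / (1 - u)) <= INR n * (1 + 8 * u / 3)) by (apply Rmult_le_compat_l; [apply pos_INR| lra]).
    assert (lam * (1 + u) <= 2 * lam) by nra. lra.
Qed.

(** * Uniform convergence of monotone functions *)

Lemma eventually_forall_le (Pr : nat -> nat -> Prop) J :
  (forall i, (i <= J)%nat -> exists N, forall n, (N <= n)%nat -> Pr i n) ->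
  exists N, forall i, (i <= J)%nat -> forall n, (N <= n)%nat -> Pr i n.
Proof.
  intros H. induction J.
  - destruct (H 0%nat (le_n 0)) as [N HN]. exists N. intros i Hi n Hn. replace i with 0%nat by lia. auto.
  - destruct IHJ as [N1 HN1]; [intros i Hi; apply H; lia|].
    destruct (H (S J) (le_n _)) as [N2 HN2]. exists (Nat.max N1 N2). intros i Hi n Hn.
    destruct (Nat.eq_dec i (S J)) as [->|Hne]; [apply HN2; lia| apply HN1; lia].
Qed.

Lemma grid_cell y1 h J y : 0 <= h -> (1 <= J)%nat -> y1 <= y <= y1 + INR J * h ->
  exists i, (i < J)%nat /\ y1 + INR i * h <= y <= y1 + INR (S i) * h.
Proof.
  intros Hh. induction J; intros HJ Hy; [lia|].
  destruct (Rle_dec y (y1 + INR J * h)) as [Hle|Hgt].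
  - destruct J; [exists 0%nat; split; [lia|]; simpl in *; lra|].
    destruct (IHJ ltac:(lia) ltac:(lra)) as [i [Hi Hi2]]. exists i. split; [lia| auto].
  - exists J. split; [lia| lra].
Qed.

Lemma uniform_of_pointwise_monotone (F : nat -> R -> R) (Phi : R -> R) (y1 y2 Lip : R) :
  y1 <= y2 -> 0 <= Lip ->
  (forall n y z, y1 <= y <= z -> z <= y2 -> F n y <= F n z) ->
  (forall y z, y1 <= y <= z -> z <= y2 -> Phi z - Phi y <= Lip * (z - y)) ->
  (forall y, y1 <= y <= y2 -> forall d, 0 < d -> exists N, forall n, (N <= n)%nat -> Rabs (F n y - Phi y) <= d) ->
  forall d, 0 < d -> exists N, forall n, (N <= n)%nat -> forall y, y1 <= y <= y2 -> Rabs (F n y - Phi y) <= d.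
Proof.
  intros Hy12 HLip Hmono HPhi Hpt d Hd.
  destruct (nat_above (2 * Lip * (y2 - y1) / d)) as [J0 HJ0].
  set (J := S J0). set (h := (y2 - y1) / INR J).
  assert (HJ : 0 < INR J) by (apply lt_0_INR; unfold J; lia).
  assert (Hh : 0 <= h) by (apply Rdiv_le_0_compat; lra).
  assert (HJh : INR J * h = y2 - y1) by (unfold h; field; lra).
  assert (HLh : Lip * h <= d / 2).
  { unfold h. apply Rmult_le_reg_r with (2 * INR J / d); [apply Rdiv_lt_0_compat; lra|].
    replace (Lip * ((y2 - y1) / INR J) * (2 * INR J / d)) with (2 * Lip * (y2 - y1) / d) by (field; lra).
    replace (d / 2 * (2 * INR J / d)) with (INR J) by (field; lra).
    unfold J. rewrite S_INR. lra. }
  assert (Hgrid : forall i, (i <= J)%nat -> y1 <= y1 + INR i * h <= y2).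
  { intros i Hi. apply le_INR in Hi. pose proof (pos_INR i).
    assert (0 <= INR i * h <= INR J * h) by (split; [apply Rmult_le_pos| apply Rmult_le_compat_r]; lra).
    lra. }
  destruct (eventually_forall_le (fun i n => Rabs (F n (y1 + INR i * h) - Phi (y1 + INR i * h)) <= d / 2) J)
    as [N HN]; [intros i Hi; apply Hpt; [apply Hgrid; auto| lra]|].
  exists N. intros n Hn y Hy.
  destruct (grid_cell y1 h J y Hh ltac:(unfold J; lia) ltac:(lra)) as [i [Hi [Hl Hr]]].
  pose proof (Hgrid i ltac:(lia)). pose proof (Hgrid (S i) ltac:(lia)).
  pose proof (HN i ltac:(lia) n Hn) as Hi1. pose proof (HN (S i) ltac:(lia) n Hn) as Hi2.
  pose proof (Hmono n _ _ (conj (proj1 H) Hl) (proj2 Hy)).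
  pose proof (Hmono n _ _ (conj (proj1 Hy) Hr) (proj2 H0)).
  pose proof (HPhi _ _ (conj (proj1 H) Hl) (proj2 Hy)).
  pose proof (HPhi _ _ (conj (proj1 Hy) Hr) (proj2 H0)).
  rewrite S_INR in *.
  assert (Lip * (y - (y1 + INR i * h)) <= Lip * h) by (apply Rmult_le_compat_l; lra).
  assert (Lip * (y1 + (INR i + 1) * h - y) <= Lip * h) by (apply Rmult_le_compat_l; lra).
  apply Rabs_le_between in Hi1. apply Rabs_le_between in Hi2. apply Rabs_le. lra.
Qed.

(** * The singular time *)

Definition Qpoly (A B C y : R) := A * y ^ 2 + B * y + C.

(* [tau] solves [f' = -1/Q] on (0, oo) and is squeezed between [y/Q(y)] and [1/(A y)]; this is
   all that is used about it. *)
Definition singular_time_spec (A B C : R) (f : R -> R) :=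
  (forall y, 0 < y -> is_derive f y (- / Qpoly A B C y)) /\
  (forall y, 0 < y -> y / Qpoly A B C y <= f y <= / (A * y)).

Section SingularTime.
Variables A B C : R.
Hypotheses (HA : 0 < A) (HB : 0 <= B) (HC : 0 <= C).

Let D := B ^ 2 - 4 * A * C.

Lemma singular_time_spec_pos_disc : 0 < D -> singular_time_spec A B C (tau A B C).
Proof.
  intros Dpos. set (s := sqrt D).
  assert (Hs2 : s * s = D) by (apply sqrt_sqrt; lra).
  assert (Hs0 : 0 < s) by (apply sqrt_lt_R0; lra).
  assert (HsB : s <= B).
  { unfold s. rewrite <- (sqrt_pow2 B HB). apply sqrt_le_1_alt. unfold D. nra. }
  set (r1 := (- B - s) / (2 * A)). set (r2 := (- B + s) / (2 * A)).
  assert (Hr2 : r2 <= 0) by (unfold r2; apply Rmult_le_reg_r with (2 * A); [lra|]; field_simplify; lra).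
  assert (Hr12 : r1 < r2) by (unfold r1, r2; apply Rmult_lt_reg_r with (2 * A); [lra|]; field_simplify; lra).
  assert (HQ : forall y, Qpoly A B C y = A * (y - r1) * (y - r2)).
  { intros y. unfold Qpoly, r1, r2. field_simplify; [|lra].
    replace (s ^ 2) with D by (simpl; lra). unfold D. field. lra. }
  assert (Htau : forall y, tau A B C y = / (A * (r2 - r1)) * ln ((y - r1) / (y - r2))).
  { intros y. unfold tau. fold D. destruct (Rlt_dec 0 D); [reflexivity|lra]. }
  split; intros y Hy.
  - apply (is_derive_ext (fun y => / (A * (r2 - r1)) * ln ((y - r1) / (y - r2)))).
    { intros; rewrite Htau; reflexivity. }
    auto_derive.
    + repeat split; try lra. apply Rdiv_lt_0_compat; lra.
    + rewrite HQ. field. repeat split; lra.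
  - rewrite Htau, HQ.
    assert (Hu : 0 < (y - r1) / (y - r2)) by (apply Rdiv_lt_0_compat; lra).
    pose proof (ln_le_sub_1 _ Hu). pose proof (ln_ge_1_sub_inv _ Hu).
    assert (HK : 0 < / (A * (r2 - r1))) by (apply Rinv_0_lt_compat, Rmult_lt_0_compat; lra).
    split.
    + apply Rle_trans with (/ (A * (r2 - r1)) * (1 - / ((y - r1) / (y - r2)))).
      * replace (/ (A * (r2 - r1)) * (1 - / ((y - r1) / (y - r2)))) with (/ (A * (y - r1)))
          by (field; lra).
        apply Rmult_le_reg_r with (A * (y - r1) * (y - r2)).
        { apply Rmult_lt_0_compat; [apply Rmult_lt_0_compat|]; lra. }
        field_simplify; lra.
      * apply Rmult_le_compat_l; lra.
    + apply Rle_trans with (/ (A * (r2 - r1)) * ((y - r1) / (y - r2) - 1)).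
      * apply Rmult_le_compat_l; lra.
      * replace (/ (A * (r2 - r1)) * ((y - r1) / (y - r2) - 1)) with (/ (A * (y - r2)))
          by (field; lra).
        apply Rinv_le_contravar; [apply Rmult_lt_0_compat; lra| apply Rmult_le_compat_l; lra].
Qed.

Lemma singular_time_spec_zero_disc : D = 0 -> singular_time_spec A B C (tau A B C).
Proof.
  intros D0. set (r := - B / (2 * A)).
  assert (Hr : r <= 0) by (unfold r; apply Rmult_le_reg_r with (2 * A); [lra|]; field_simplify; lra).
  assert (HQ : forall y, Qpoly A B C y = A * (y - r) ^ 2).
  { intros y. unfold Qpoly, r. assert (B ^ 2 = 4 * A * C) by (unfold D in D0; lra).
    field_simplify; [|lra]. rewrite H. field. lra. }
  assert (Htau : forall y, tau A B C y = / (A * (y - r))).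
  { intros y. unfold tau. fold D. destruct (Rlt_dec 0 D); [lra|].
    destruct (Req_EM_T D 0); [reflexivity|lra]. }
  split; intros y Hy.
  - apply (is_derive_ext (fun y => / (A * (y - r)))). { intros; rewrite Htau; reflexivity. }
    auto_derive; [apply Rgt_not_eq, Rmult_lt_0_compat; lra|].
    rewrite HQ. field. lra.
  - rewrite Htau, HQ. split.
    + apply Rmult_le_reg_r with (A * (y - r) ^ 2); [apply Rmult_lt_0_compat; [lra| apply pow_lt; lra]|].
      field_simplify; lra.
    + apply Rinv_le_contravar; [apply Rmult_lt_0_compat; lra| apply Rmult_le_compat_l; lra].
Qed.

Lemma singular_time_spec_neg_disc : D < 0 -> singular_time_spec A B C (tau A B C).
Proof.
  intros Dneg. set (p := - B / (2 * A)). set (q := sqrt (- D) / (2 * A)).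
  assert (Hp : p <= 0) by (unfold p; apply Rmult_le_reg_r with (2 * A); [lra|]; field_simplify; lra).
  assert (Hsq : sqrt (- D) * sqrt (- D) = - D) by (apply sqrt_sqrt; lra).
  assert (Hq : 0 < q) by (unfold q; apply Rdiv_lt_0_compat; [apply sqrt_lt_R0|]; lra).
  assert (HQ : forall y, Qpoly A B C y = A * ((y - p) ^ 2 + q ^ 2)).
  { intros y. unfold Qpoly, p, q. field_simplify; [|lra].
    replace (sqrt (- D) ^ 2) with (- D) by (simpl; lra). unfold D. field. lra. }
  assert (Htau : forall y, tau A B C y = (PI / 2 - atan ((y - p) / q)) / (A * q)).
  { intros y. unfold tau. fold D. destruct (Rlt_dec 0 D); [lra|].
    destruct (Req_EM_T D 0); [lra|reflexivity]. }
  assert (Hpq : forall y, 0 < (y - p) ^ 2 + q ^ 2)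
    by (intros y; pose proof (pow2_ge_0 (y - p)); assert (0 < q ^ 2) by (apply pow_lt; lra); lra).
  split; intros y Hy.
  - apply (is_derive_ext (fun y => (PI / 2 - atan ((y - p) / q)) / (A * q))).
    { intros; rewrite Htau; reflexivity. }
    auto_derive; [auto|]. rewrite HQ. specialize (Hpq y). simpl in *.
    field. repeat split; lra.
  - rewrite Htau, HQ.
    set (v := (y - p) / q).
    assert (Hv : 0 < v) by (apply Rdiv_lt_0_compat; lra).
    rewrite <- (atan_inv _ Hv).
    assert (Hiv : 0 <= / v) by (apply Rlt_le, Rinv_0_lt_compat; auto).
    pose proof (atan_le_id _ Hiv). pose proof (atan_ge_div _ Hiv).
    assert (HAq : 0 < A * q) by (apply Rmult_lt_0_compat; lra).
    split.
    + replace (y / (A * ((y - p) ^ 2 + q ^ 2))) with (/ v / (1 + (/ v) ^ 2) / (A * q) * (y / (y - p))).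
      2:{ unfold v. specialize (Hpq y). simpl in *. field. repeat split; lra. }
      apply Rle_trans with (/ v / (1 + (/ v) ^ 2) / (A * q)).
      * assert (0 < / v / (1 + (/ v) ^ 2) / (A * q)).
        { apply Rdiv_lt_0_compat; auto. apply Rdiv_lt_0_compat; [apply Rinv_0_lt_compat; auto|].
          pose proof (pow2_ge_0 (/ v)). lra. }
        assert (y / (y - p) <= 1) by (apply Rmult_le_reg_r with (y - p); [lra|]; field_simplify; lra).
        nra.
      * apply Rmult_le_compat_r; [left; apply Rinv_0_lt_compat; lra| lra].
    + apply Rle_trans with (/ v / (A * q)).
      * apply Rmult_le_compat_r; [left; apply Rinv_0_lt_compat; lra| lra].
      * replace (/ v / (A * q)) with (/ (A * (y - p))) by (unfold v; field; lra).
        apply Rinv_le_contravar; [apply Rmult_lt_0_compat; lra| apply Rmult_le_compat_l; lra].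
Qed.

Lemma tau_singular_time_spec : singular_time_spec A B C (tau A B C).
Proof.
  destruct (Rtotal_order D 0) as [H|[H|H]].
  - exact (singular_time_spec_neg_disc H).
  - exact (singular_time_spec_zero_disc H).
  - exact (singular_time_spec_pos_disc H).
Qed.

Lemma Qpoly_pos y : 0 < y -> 0 < Qpoly A B C y.
Proof.
  intros Hy. unfold Qpoly.
  assert (0 < A * y ^ 2) by (apply Rmult_lt_0_compat; auto; apply pow_lt; auto). nra.
Qed.

Lemma Qpoly_le x y : 0 <= x -> x <= y -> Qpoly A B C x <= Qpoly A B C y.
Proof. intros Hx Hxy. unfold Qpoly. assert (x ^ 2 <= y ^ 2) by (apply pow_incr; lra). nra. Qed.

Lemma is_derive_tau y : 0 < y -> is_derive (tau A B C) y (- / Qpoly A B C y).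
Proof. apply tau_singular_time_spec. Qed.

Lemma tau_ge y : 0 < y -> y / Qpoly A B C y <= tau A B C y.
Proof. apply tau_singular_time_spec. Qed.

Lemma tau_le y : 0 < y -> tau A B C y <= / (A * y).
Proof. apply tau_singular_time_spec. Qed.

Lemma tau_pos y : 0 < y -> 0 < tau A B C y.
Proof.
  intros Hy. eapply Rlt_le_trans; [|apply tau_ge; auto].
  apply Rdiv_lt_0_compat; auto. apply Qpoly_pos; auto.
Qed.

Lemma tau_sub_le x y : 0 < x -> x <= y -> 0 <= tau A B C x - tau A B C y <= (y - x) / Qpoly A B C x.
Proof.
  intros Hx Hxy.
  assert (Hd : forall z, x <= z <= y -> is_derive (fun z => - tau A B C z) z (/ Qpoly A B C z)).
  { intros z Hz. replace (/ Qpoly A B C z) with (- - / Qpoly A B C z) by ring.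
    apply (is_derive_opp (tau A B C)). apply is_derive_tau. lra. }
  split.
  - enough (- tau A B C x <= - tau A B C y) by lra.
    apply (le_of_derive_nonneg _ _ x y Hxy Hd).
    intros z Hz. apply Rlt_le, Rinv_0_lt_compat, Qpoly_pos. lra.
  - pose proof (sub_le_of_derive_le _ _ x y (/ Qpoly A B C x) Hxy Hd) as H.
    unfold Rdiv. rewrite Rmult_comm. enough (- tau A B C y - - tau A B C x <= / Qpoly A B C x * (y - x)) by lra.
    apply H. intros z Hz. apply Rinv_le_contravar; [apply Qpoly_pos; auto| apply Qpoly_le; lra].
Qed.

(* A quantitative form of [A y tau(y) -> 1] as [y -> oo]. *)
Lemma tau_mul_ge mu Y : 0 <= mu <= 1 -> 1 <= Y -> B + C <= (1 - mu) * A * Y ->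
  mu <= A * Y * tau A B C Y.
Proof.
  intros Hmu HY Hb.
  assert (HQ : 0 < Qpoly A B C Y) by (apply Qpoly_pos; lra).
  assert (HQ2 : mu * Qpoly A B C Y <= A * Y ^ 2).
  { unfold Qpoly. assert (B * Y + C <= (B + C) * Y) by nra.
    assert ((B + C) * Y <= (1 - mu) * A * Y * Y) by (apply Rmult_le_compat_r; lra).
    assert (0 <= B * Y + C) by nra. assert (mu * (B * Y + C) <= B * Y + C) by nra. replace (Y ^ 2) with (Y * Y) by ring. lra. }
  apply Rle_trans with (A * Y * (Y / Qpoly A B C Y)).
  - apply Rmult_le_reg_r with (Qpoly A B C Y); auto.
    replace (A * Y * (Y / Qpoly A B C Y) * Qpoly A B C Y) with (A * Y ^ 2) by (field; lra). lra.
  - apply Rmult_le_compat_l; [apply Rmult_le_pos; lra| apply tau_ge; lra].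
Qed.

End SingularTime.

(** * Negative binomial sums *)

Lemma C_nonneg n k : 0 <= Binomial.C n k.
Proof.
  unfold Binomial.C. apply Rmult_le_pos; [apply pos_INR|].
  left; apply Rinv_0_lt_compat, Rmult_lt_0_compat; apply INR_fact_lt_0.
Qed.

Lemma C_diag n : Binomial.C n n = 1.
Proof. unfold Binomial.C. rewrite Nat.sub_diag. simpl. field. apply INR_fact_neq_0. Qed.

Lemma C_0 n : Binomial.C n 0 = 1.
Proof. unfold Binomial.C. rewrite Nat.sub_0_r. simpl. field. apply INR_fact_neq_0. Qed.

Lemma C_add_fact p N :
  INR (Factorial.fact (p + N)) / INR (Factorial.fact N) = INR (Factorial.fact p) * Binomial.C (p + N) N.
Proof.
  unfold Binomial.C. replace (p + N - N)%nat with p by lia. field. split; apply INR_fact_neq_0.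
Qed.

(* Partial sums of [sum_k C(p+k,k) r^k = (1-r)^-(p+1)]. *)
Definition negbin_sum (p M : nat) (r : R) := sum_f_R0 (fun k => Binomial.C (p + k) k * r ^ k) M.

Lemma negbin_sum_le_succ p M r : 0 <= r -> negbin_sum p M r <= negbin_sum p (S M) r.
Proof.
  intros Hr. unfold negbin_sum. rewrite tech5.
  assert (0 <= Binomial.C (p + S M) (S M) * r ^ S M) by (apply Rmult_le_pos; [apply C_nonneg| apply pow_le; auto]).
  lra.
Qed.

Lemma negbin_sum_S p M r : negbin_sum (S p) (S M) r = negbin_sum p (S M) r + r * negbin_sum (S p) M r.
Proof.
  unfold negbin_sum. rewrite !sum_f_R0_shift, !Nat.add_0_r, !C_0, scal_sum.
  rewrite (sum_eq _ (fun i => Binomial.C (p + S i) (S i) * r ^ S i + Binomial.C (S p + i) i * r ^ i * r)).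
  - rewrite sum_plus. ring.
  - intros i _. replace (S p + S i)%nat with (S (p + S i)) by lia.
    replace (S p + i)%nat with (p + S i)%nat by lia. rewrite <- pascal by lia. simpl. ring.
Qed.

Lemma negbin_sum_le p M r : 0 <= r < 1 -> negbin_sum p M r <= / (1 - r) ^ (S p).
Proof.
  intros [Hr0 Hr1]. revert M. induction p; intros M.
  - unfold negbin_sum. rewrite sum_eq with (Bn := fun k => r ^ k) by (intros i _; simpl; rewrite C_diag; ring).
    pose proof (GP_finite r M). assert (0 <= r ^ (M + 1)) by (apply pow_le; auto).
    apply Rmult_le_reg_r with (1 - r); [lra|]. simpl. rewrite Rmult_1_r, Rinv_l by lra. lra.
  - assert (Hs : negbin_sum (S p) M r * (1 - r) <= negbin_sum p M r).
    { destruct M.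
      - unfold negbin_sum. simpl. rewrite !C_0. lra.
      - pose proof (negbin_sum_le_succ (S p) M r Hr0). rewrite negbin_sum_S in *.
        assert (0 <= r * (negbin_sum p (S M) r + r * negbin_sum (S p) M r - negbin_sum (S p) M r))
          by (apply Rmult_le_pos; lra).
        nra. }
    assert (0 < (1 - r) ^ S p) by (apply pow_lt; lra).
    apply Rmult_le_reg_r with (1 - r); [lra|].
    apply Rle_trans with (negbin_sum p M r); auto. apply Rle_trans with (/ (1 - r) ^ S p); auto.
    right. replace ((1 - r) ^ S (S p)) with ((1 - r) * (1 - r) ^ S p) by (simpl; ring). field. split; lra.
Qed.

Lemma negbin_term_small p q eps : 0 <= q < 1 -> 0 < eps ->
  exists N, Binomial.C (p + N) N * q ^ N < eps.
Proof.
  intros Hq He. destruct (Classical_Prop.classic (exists N, Binomial.C (p + N) N * q ^ N < eps)) as [H|H]; auto.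
  exfalso.
  assert (Hall : forall N, eps <= Binomial.C (p + N) N * q ^ N)
    by (intros N; apply Rnot_lt_le; intro; apply H; exists N; auto).
  destruct (nat_above (/ (1 - q) ^ S p / eps)) as [M HM].
  assert (Hsum : INR (S M) * eps <= negbin_sum p M q).
  { unfold negbin_sum. clear HM. induction M.
    - simpl. rewrite Rmult_1_l. apply Hall.
    - rewrite tech5, S_INR. specialize (Hall (S M)). lra. }
  pose proof (negbin_sum_le p M q Hq).
  assert (/ (1 - q) ^ S p < INR M * eps).
  { apply Rmult_lt_compat_r with (r := eps) in HM; auto.
    unfold Rdiv in HM. rewrite Rmult_assoc, Rinv_l, Rmult_1_r in HM by lra. exact HM. }
  rewrite S_INR in Hsum. lra.
Qed.

(* Chernoff bounds, by exponential tilting of the ratio [r]. *)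
Lemma negbin_upper_tail_chernoff (p N : nat) (r r' z K : R) :
  0 <= r -> 0 <= r' < 1 -> 0 <= z -> r <= r' * exp (- z) ->
  sum_f_R0 (fun k => if Rle_dec K (INR k) then Binomial.C (p + k) k * r ^ k else 0) N
   <= exp (- z * K) / (1 - r') ^ (S p).
Proof.
  intros Hr Hr' Hz Hrr.
  apply Rle_trans with (exp (- z * K) * negbin_sum p N r').
  - unfold negbin_sum. rewrite scal_sum. apply sum_Rle. intros k _.
    destruct (Rle_dec K (INR k)) as [HK|HK].
    + rewrite Rmult_assoc. apply Rmult_le_compat_l; [apply C_nonneg|].
      assert (r ^ k <= r' ^ k * exp (- z) ^ k) by (rewrite <- Rpow_mult_distr; apply pow_incr; auto).
      assert (exp (- z) ^ k <= exp (- z * K)).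
      { eapply Rle_trans; [apply (pow_le_exp _ (- z)); [left; apply exp_pos| lra]|]. apply exp_le_mono. nra. }
      assert (0 <= r' ^ k) by (apply pow_le; lra). nra.
    + apply Rmult_le_pos; [apply Rmult_le_pos; [apply C_nonneg| apply pow_le; lra]| left; apply exp_pos].
  - apply Rmult_le_compat_l; [left; apply exp_pos|]. apply negbin_sum_le; lra.
Qed.

Lemma negbin_lower_tail_chernoff (p N : nat) (r r' z K : R) :
  0 <= r -> 0 <= r' < 1 -> 0 <= z -> r <= r' * exp z ->
  sum_f_R0 (fun k => if Rle_dec (INR k) K then Binomial.C (p + k) k * r ^ k else 0) N
   <= exp (z * K) / (1 - r') ^ (S p).
Proof.
  intros Hr Hr' Hz Hrr.
  apply Rle_trans with (exp (z * K) * negbin_sum p N r').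
  - unfold negbin_sum. rewrite scal_sum. apply sum_Rle. intros k _.
    destruct (Rle_dec (INR k) K) as [HK|HK].
    + rewrite Rmult_assoc. apply Rmult_le_compat_l; [apply C_nonneg|].
      assert (r ^ k <= r' ^ k * exp z ^ k) by (rewrite <- Rpow_mult_distr; apply pow_incr; auto).
      assert (exp z ^ k <= exp (z * K)).
      { eapply Rle_trans; [apply (pow_le_exp _ z); [left; apply exp_pos| lra]|]. apply exp_le_mono. nra. }
      assert (0 <= r' ^ k) by (apply pow_le; lra). nra.
    + apply Rmult_le_pos; [apply Rmult_le_pos; [apply C_nonneg| apply pow_le; lra]| left; apply exp_pos].
  - apply Rmult_le_compat_l; [left; apply exp_pos|]. apply negbin_sum_le; lra.
Qed.

(* The mass of [C(p+k,k) r^k] concentrates around [k = p r / (1 - r)]; relative window [u]. *)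
Lemma negbin_upper_tail_le (p N : nat) (r u : R) : 1 / 2 <= r < 1 -> 0 < u <= 1 / 4 ->
  sum_f_R0 (fun k => if Rle_dec (INR p * (r + u) / (1 - r)) (INR k) then Binomial.C (p + k) k * r ^ k else 0) N
  <= 3 * exp (- INR p * (u ^ 2 / 8)) / (1 - r) ^ (S p).
Proof.
  intros [Hr1 Hr2] [Hu1 Hu2].
  set (v := u / 2). assert (Hv : 0 < v <= 1 / 8) by (unfold v; lra).
  pose proof (pos_INR p) as Hp.
  (* tilted ratio [r'] and exponent [z] with [r = r' (1 - z)] *)
  set (r' := (r + v) / (1 + v)). set (z := v * (1 - r) / (r + v)).
  assert (Hr' : 0 <= r' < 1).
  { unfold r'. split; [apply Rmult_le_pos; [lra| left; apply Rinv_0_lt_compat; lra]|].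
    apply Rmult_lt_reg_r with (1 + v); [lra|]. field_simplify; lra. }
  assert (Hz : 0 <= z) by (unfold z; apply Rmult_le_pos; [apply Rmult_le_pos; lra| left; apply Rinv_0_lt_compat; lra]).
  assert (Hrr : r <= r' * exp (- z)).
  { assert (1 - z <= exp (- z)) by (pose proof (exp_ineq1_le (- z)); lra).
    replace r with (r' * (1 - z)) at 1 by (unfold r', z; field; lra).
    apply Rmult_le_compat_l; lra. }
  eapply Rle_trans; [apply (negbin_upper_tail_chernoff p N r r' z); auto; lra|].
  replace (1 - r') with ((1 - r) / (1 + v)) by (unfold r'; field; lra).
  rewrite pow_div_distr by lra.
  replace (exp (- z * (INR p * (r + u) / (1 - r))) / ((1 - r) ^ S p / (1 + v) ^ S p))
    with (exp (- z * (INR p * (r + u) / (1 - r))) * (1 + v) ^ S p / (1 - r) ^ S p)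
    by (field; split; apply pow_nonzero; lra).
  unfold Rdiv. apply Rmult_le_compat_r; [left; apply Rinv_0_lt_compat, pow_lt; lra|].
  rewrite (pow_eq_exp_ln (1 + v)), <- exp_plus by lra.
  assert (Hln : ln (1 + v) <= v) by (pose proof (ln_le_sub_1 (1 + v)); lra).
  assert (E3 : exp v <= 3) by (apply Rle_trans with (exp 1); [apply exp_le_mono; lra| apply exp_le_3]).
  apply Rle_trans with (exp v * exp (- INR p * (u ^ 2 / 8)));
    [|apply Rmult_le_compat_r; [left; apply exp_pos| auto]].
  rewrite <- exp_plus. apply exp_le_mono.
  replace (- z * (INR p * (r + u) * / (1 - r))) with (- INR p * (v * (r + u) / (r + v)))
    by (unfold z; field; lra).
  rewrite S_INR.
  assert ((INR p + 1) * ln (1 + v) <= (INR p + 1) * v) by (apply Rmult_le_compat_l; lra).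
  assert (u ^ 2 / 8 <= v * (r + u) / (r + v) - v).
  { unfold v. apply Rmult_le_reg_r with (r + u / 2); [lra|]. field_simplify; [|lra]. nra. }
  assert (INR p * (u ^ 2 / 8) <= INR p * (v * (r + u) / (r + v) - v)) by (apply Rmult_le_compat_l; lra).
  lra.
Qed.

Lemma negbin_lower_tail_le (p N : nat) (r u : R) : 1 / 2 <= r < 1 -> 0 < u <= 1 / 4 ->
  sum_f_R0 (fun k => if Rle_dec (INR k) (INR p * (r - u) / (1 - r)) then Binomial.C (p + k) k * r ^ k else 0) N
  <= exp (- INR p * (u ^ 2 / 8)) / (1 - r) ^ (S p).
Proof.
  intros [Hr1 Hr2] [Hu1 Hu2].
  set (v := u / 2). assert (Hv : 0 < v <= 1 / 8) by (unfold v; lra).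
  pose proof (pos_INR p) as Hp.
  (* tilted ratio [r''] and exponent [z] with [r = r'' (1 + z)] *)
  set (r'' := r - v * (1 - r)).
  assert (Hr'' : r - v <= r'') by (unfold r''; nra).
  set (z := v * (1 - r) / r'').
  assert (Hz : 0 <= z) by (unfold z; apply Rmult_le_pos; [apply Rmult_le_pos; lra| left; apply Rinv_0_lt_compat; lra]).
  assert (Hr''1 : 0 <= r'' < 1).
  { split; [lra|]. assert (0 <= v * (1 - r)) by (apply Rmult_le_pos; lra). unfold r''. lra. }
  assert (Hrr : r <= r'' * exp z).
  { assert (1 + z <= exp z) by apply exp_ineq1_le.
    assert (E : r'' * (1 + z) = r).
    { unfold z. replace (r'' * (1 + v * (1 - r) / r'')) with (r'' + v * (1 - r)) by (field; lra).
      unfold r''. ring. }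
    rewrite <- E at 1. apply Rmult_le_compat_l; lra. }
  eapply Rle_trans; [apply (negbin_lower_tail_chernoff p N r r'' z); auto; lra|].
  replace (1 - r'') with ((1 - r) * (1 + v)) by (unfold r''; ring).
  rewrite Rpow_mult_distr, (pow_eq_exp_ln (1 + v)) by lra.
  replace (exp (z * (INR p * (r - u) / (1 - r))) / ((1 - r) ^ S p * exp (INR (S p) * ln (1 + v))))
    with (exp (z * (INR p * (r - u) / (1 - r)) - INR (S p) * ln (1 + v)) / (1 - r) ^ S p).
  2:{ unfold Rminus at 1. rewrite exp_plus, exp_Ropp. field. split; [apply Rgt_not_eq, exp_pos|].
      apply pow_nonzero; lra. }
  unfold Rdiv. apply Rmult_le_compat_r; [left; apply Rinv_0_lt_compat, pow_lt; lra|].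
  apply exp_le_mono.
  replace (z * (INR p * (r - u) * / (1 - r))) with (INR p * (v * ((r - u) / r''))) by (unfold z; field; lra).
  assert ((r - u) / r'' <= 1 - v).
  { apply Rmult_le_reg_r with r''; [lra|]. field_simplify; [|lra]. unfold r'', v. nra. }
  assert (v * ((r - u) / r'') <= v * (1 - v)) by (apply Rmult_le_compat_l; lra).
  pose proof (ln_1_plus_ge v ltac:(lra)).
  assert (0 <= ln (1 + v)) by (rewrite <- ln_1; apply ln_le; lra).
  rewrite S_INR.
  assert (INR p * (v * ((r - u) / r'')) <= INR p * (v * (1 - v))) by (apply Rmult_le_compat_l; lra).
  assert (INR p * (v - v ^ 2 / 2) <= INR p * ln (1 + v)) by (apply Rmult_le_compat_l; lra).
  assert (INR p * (v * (1 - v)) = INR p * (v - v ^ 2 / 2) - INR p * (u ^ 2 / 8)) by (unfold v; field).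
  lra.
Qed.

(** * Weighted Motzkin polynomials *)

Section Motzkin.
Variables a b c al0 ga0 : nat.
Hypotheses (Ha : (0 < a)%nat) (Hal0 : (0 < al0)%nat).

(* The balanced case [beta0 = b] throughout. *)
Definition w n k := wM a b c al0 b ga0 n k.
Definition P n y := Pn a b c al0 b ga0 n y.
Definition dP n y := sum_f_R0 (fun k => INR k * INR (w n k) * y ^ (k - 1)) n.
Definition Q y := Qpoly (INR a) (INR c) (INR b) y.
Definition L y := INR al0 * y + INR ga0.
Definition tauQ := tau (INR a) (INR c) (INR b).

Lemma w_eq_0 n k : (n < k)%nat -> w n k = 0%nat.
Proof.
  unfold w. revert k. induction n; intros k Hk.
  - destruct k; [lia|reflexivity].
  - simpl. destruct k as [|j]; [lia|].
    rewrite IHn, (IHn (S j)), (IHn (S (S j))) by lia. lia.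
Qed.

Lemma w_diag n : w (S n) (S n) = ((a * n + al0) * w n n)%nat.
Proof.
  unfold w at 1. simpl. fold (w n n) (w n (S n)) (w n (S (S n))).
  rewrite (w_eq_0 n (S n)), (w_eq_0 n (S (S n))) by lia. lia.
Qed.

Lemma P_eq_sum n N y : (n <= N)%nat -> P n y = sum_f_R0 (fun k => INR (w n k) * y ^ k) N.
Proof.
  intros H. symmetry. apply sum_f_R0_zero_tail; auto.
  intros k Hk. rewrite w_eq_0 by lia. simpl; ring.
Qed.

Lemma dP_eq_sum n N y : (n <= N)%nat ->
  dP n y = sum_f_R0 (fun k => INR k * INR (w n k) * y ^ (k - 1)) N.
Proof.
  intros H. symmetry. apply sum_f_R0_zero_tail; auto.
  intros k Hk. rewrite w_eq_0 by lia. simpl; ring.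
Qed.

Lemma is_derive_P n y : is_derive (P n) y (dP n y).
Proof. exact (is_derive_sum_pow (fun k => INR (w n k)) n y). Qed.

Lemma P_0 y : P 0 y = 1.
Proof. unfold P, Pn. simpl. ring. Qed.

(* The recurrence for [w] is the coefficientwise form of [P_(n+1) = Q P_n' + L P_n]. *)
Lemma P_S n y : P (S n) y = Q y * dP n y + L y * P n y.
Proof.
  assert (Hsplit : forall k, INR (w (S n) k) * y ^ k =
     (match k with O => 0 | S j => INR (a * j + al0) * INR (w n j) * y ^ S j end)
     + (INR c * INR k + INR ga0) * INR (w n k) * y ^ k
     + INR b * (INR k + 1) * INR (w n (S k)) * y ^ k).
  { intros k. unfold w at 1. simpl. fold (w n k) (w n (S k)).
    destruct k as [|j].
    - fold (w n 0). repeat rewrite ?plus_INR, ?mult_INR. simpl. ring.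
    - fold (w n j). repeat rewrite ?plus_INR, ?mult_INR. rewrite !S_INR. simpl. ring. }
  unfold P at 1, Pn. fold (w (S n)).
  rewrite (sum_eq _ _ _ (fun k _ => Hsplit k)), !sum_plus, sum_f_R0_shift.
  rewrite (tech5 (fun k => (INR c * INR k + INR ga0) * INR (w n k) * y ^ k)), (w_eq_0 n (S n)) by lia.
  rewrite (dP_eq_sum n (S (S n)) y), (sum_f_R0_shift (fun k => INR k * INR (w n k) * y ^ (k - 1)) (S n)) by lia.
  set (Sb := sum_f_R0 (fun i => INR (S i) * INR (w n (S i)) * y ^ (S i - 1)) (S n)).
  assert (Hbeta : sum_f_R0 (fun k => INR b * (INR k + 1) * INR (w n (S k)) * y ^ k) (S n) = INR b * Sb).
  { unfold Sb. rewrite scal_sum. apply sum_eq. intros i _.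
    rewrite S_INR. replace (S i - 1)%nat with i by lia. ring. }
  assert (Halpha : sum_f_R0 (fun i => INR (a * i + al0) * INR (w n i) * y ^ S i) n
     = INR a * y ^ 2 * dP n y + INR al0 * y * P n y).
  { rewrite (P_eq_sum n n y) by lia. unfold dP. rewrite !scal_sum, <- sum_plus. apply sum_eq.
    intros [|i] _; rewrite plus_INR, mult_INR; simpl; [ring|]. rewrite Nat.sub_0_r. ring. }
  assert (Hgamma : sum_f_R0 (fun k => (INR c * INR k + INR ga0) * INR (w n k) * y ^ k) n
     = INR c * y * dP n y + INR ga0 * P n y).
  { rewrite (P_eq_sum n n y) by lia. unfold dP. rewrite !scal_sum, <- sum_plus. apply sum_eq.
    intros [|i] _; simpl; [ring|]. rewrite Nat.sub_0_r. ring. }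
  assert (HSb : Sb = dP n y).
  { rewrite (dP_eq_sum n (S (S n)) y), sum_f_R0_shift by lia. unfold Sb. simpl (INR 0). ring. }
  rewrite Hbeta, Halpha, Hgamma, HSb. unfold Q, Qpoly, L. simpl (INR 0). ring.
Qed.

Lemma INR_a_pos : 0 < INR a.
Proof. apply lt_0_INR. exact Ha. Qed.

Lemma Q_pos y : 0 < y -> 0 < Q y.
Proof. apply Qpoly_pos; [apply INR_a_pos| apply pos_INR| apply pos_INR]. Qed.

Lemma Q_le x y : 0 <= x -> x <= y -> Q x <= Q y.
Proof. apply Qpoly_le; [apply INR_a_pos| apply pos_INR]. Qed.

Lemma L_ge0 y : 0 <= y -> 0 <= L y.
Proof. intros. unfold L. pose proof (pos_INR al0). pose proof (pos_INR ga0). nra. Qed.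

Lemma L_le x y : x <= y -> L x <= L y.
Proof. intros. unfold L. pose proof (pos_INR al0). nra. Qed.

Lemma P_ge0 n y : 0 <= y -> 0 <= P n y.
Proof.
  intros Hy. apply cond_pos_sum. intros k. apply Rmult_le_pos; [apply pos_INR| apply pow_le; auto].
Qed.

Lemma dP_ge0 n y : 0 <= y -> 0 <= dP n y.
Proof.
  intros Hy. apply cond_pos_sum. intros k.
  apply Rmult_le_pos; [apply Rmult_le_pos; apply pos_INR| apply pow_le; auto].
Qed.

Lemma w_diag_gt0 n : (0 < w n n)%nat.
Proof. induction n; [unfold w; simpl; lia|]. rewrite w_diag. apply Nat.mul_pos_pos; lia. Qed.

Lemma P_gt0 n y : 0 < y -> 0 < P n y.
Proof.
  intros Hy. destruct n; [rewrite P_0; lra|].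
  rewrite (P_eq_sum (S n) (S n) y) by lia. cbn [sum_f_R0]. apply Rplus_le_lt_0_compat.
  - apply cond_pos_sum. intros k. apply Rmult_le_pos; [apply pos_INR| apply pow_le; lra].
  - apply Rmult_lt_0_compat; [apply lt_0_INR, w_diag_gt0| apply (pow_lt y (S n)); lra].
Qed.

Lemma P_le n y z : 0 <= y -> y <= z -> P n y <= P n z.
Proof.
  intros Hy Hyz. apply sum_Rle. intros k _.
  apply Rmult_le_compat_l; [apply pos_INR| apply pow_incr; lra].
Qed.

(* Convexity: [P n] lies above its tangents. *)
Lemma dP_mul_le_P n z d : 0 <= z -> 0 < d -> d * dP n z <= P n (z + d).
Proof.
  intros Hz Hd. unfold dP. rewrite scal_sum. apply sum_Rle. intros k _.
  pose proof (pow_add_ge_bernoulli z d k Hz (Rlt_le _ _ Hd)).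
  assert (0 <= z ^ k) by (apply pow_le; auto).
  assert (0 <= INR (w n k)) by apply pos_INR.
  fold (w n k). nra.
Qed.

Lemma mul_dP_le n y : 0 < y -> y * dP n y <= INR n * P n y.
Proof.
  intros Hy. unfold dP. rewrite (P_eq_sum n n y), !scal_sum by lia.
  apply sum_Rle. intros k Hk.
  replace (INR k * INR (w n k) * y ^ (k - 1) * y) with (INR (w n k) * y ^ k * INR k)
    by (destruct k; simpl; [ring| rewrite Nat.sub_0_r; ring]).
  apply Rmult_le_compat_l; [apply Rmult_le_pos; [apply pos_INR| apply pow_le; lra]| apply le_INR; auto].
Qed.

Lemma P_S_le n y : 0 < y -> P (S n) y <= INR (S n) * (Q y / y + L y) * P n y.
Proof.
  intros Hy. rewrite P_S, S_INR.
  pose proof (mul_dP_le n y Hy). pose proof (Q_pos y Hy). pose proof (L_ge0 y (Rlt_le _ _ Hy)).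
  pose proof (P_ge0 n y (Rlt_le _ _ Hy)). pose proof (pos_INR n).
  assert (Q y * dP n y <= INR n * (Q y / y) * P n y).
  { replace (INR n * (Q y / y) * P n y) with (Q y * (INR n * P n y / y)) by (field; lra).
    apply Rmult_le_compat_l; [lra|]. apply Rmult_le_reg_l with y; auto. field_simplify; lra. }
  assert (0 <= Q y / y * P n y) by (apply Rmult_le_pos; [apply Rlt_le, Rdiv_lt_0_compat|]; lra).
  assert (0 <= INR n * L y * P n y) by (apply Rmult_le_pos; [apply Rmult_le_pos|]; lra).
  nra.
Qed.

Lemma w_diag_ge n : INR a ^ n * INR (Factorial.fact n) <= INR (w (S n) (S n)).
Proof.
  induction n.
  - rewrite w_diag. unfold w; simpl. rewrite Nat.mul_1_r, Rmult_1_l.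
    replace (a * 0 + al0)%nat with al0 by lia. apply (le_INR 1); lia.
  - rewrite w_diag, mult_INR, plus_INR, mult_INR, fact_simpl, mult_INR. simpl (INR a ^ S n).
    assert (0 <= INR a ^ n * INR (Factorial.fact n))
      by (apply Rmult_le_pos; [apply pow_le, pos_INR| apply pos_INR]).
    pose proof (pos_INR al0). pose proof (pos_INR a). pose proof (pos_INR (S n)).
    apply Rle_trans with (INR a * INR (S n) * (INR a ^ n * INR (Factorial.fact n))); [right; ring|].
    apply Rmult_le_compat; auto; [apply Rmult_le_pos; auto| lra].
Qed.

Lemma P_ge_top n y : 0 <= y -> INR a ^ n * INR (Factorial.fact n) * y ^ S n <= P (S n) y.
Proof.
  intros Hy. rewrite (P_eq_sum (S n) (S n) y) by lia. cbn [sum_f_R0].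
  assert (0 <= sum_f_R0 (fun k => INR (w (S n) k) * y ^ k) n)
    by (apply cond_pos_sum; intros k; apply Rmult_le_pos; [apply pos_INR| apply pow_le; auto]).
  assert (0 <= y ^ S n) by (apply pow_le; auto).
  pose proof (w_diag_ge n). nra.
Qed.

(** * Transport along characteristics *)

Lemma is_derive_tauQ z : 0 < z -> is_derive tauQ z (- / Q z).
Proof. apply is_derive_tau; [apply INR_a_pos| apply pos_INR| apply pos_INR]. Qed.

Lemma tauQ_pos y : 0 < y -> 0 < tauQ y.
Proof. apply tau_pos; [apply INR_a_pos| apply pos_INR| apply pos_INR]. Qed.

Lemma tauQ_le y : 0 < y -> tauQ y <= / (INR a * y).
Proof. apply tau_le; [apply INR_a_pos| apply pos_INR| apply pos_INR]. Qed.

Lemma tauQ_sub_le x y : 0 < x -> x <= y -> 0 <= tauQ x - tauQ y <= (y - x) / Q x.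
Proof. apply tau_sub_le; [apply INR_a_pos| apply pos_INR| apply pos_INR]. Qed.

Definition Pfact m y := P m y / INR (Factorial.fact m).

Definition egf n N z T := sum_f_R0 (fun k => P (n + k) z * T ^ k / INR (Factorial.fact k)) N.
Definition egf_dP n N z T := sum_f_R0 (fun k => dP (n + k) z * T ^ k / INR (Factorial.fact k)) N.

Lemma egf_S n N z T :
  egf n (S N) z T = egf n N z T + P (n + S N) z * T ^ S N / INR (Factorial.fact (S N)).
Proof. reflexivity. Qed.

Lemma egf_at_0 n N z : egf n N z 0 = P n z.
Proof.
  induction N as [|N IH]; [unfold egf; simpl; rewrite Nat.add_0_r; field|].
  rewrite egf_S, IH. simpl. unfold Rdiv. ring.
Qed.

Lemma egf_term_le n N k z T : 0 <= z -> 0 <= T -> (k <= N)%nat ->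
  P (n + k) z * T ^ k / INR (Factorial.fact k) <= egf n N z T.
Proof.
  intros Hz HT Hk. apply (sum_f_R0_term_le (fun k => P (n + k) z * T ^ k / INR (Factorial.fact k))); auto.
  intros j. apply Rmult_le_pos; [apply Rmult_le_pos; [apply P_ge0; auto| apply pow_le; auto]|].
  apply Rlt_le, Rinv_0_lt_compat, INR_fact_lt_0.
Qed.

Lemma egf_le_S n N z T : 0 <= z -> 0 <= T -> egf n N z T <= egf n (S N) z T.
Proof.
  intros Hz HT. rewrite egf_S. assert (0 <= P (n + S N) z * T ^ S N / INR (Factorial.fact (S N))); [|lra].
  apply Rmult_le_pos; [apply Rmult_le_pos; [apply P_ge0; auto| apply pow_le; auto]|].
  apply Rlt_le, Rinv_0_lt_compat, INR_fact_lt_0.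
Qed.

Lemma egf_ge0 n N z T : 0 <= z -> 0 <= T -> 0 <= egf n N z T.
Proof.
  intros Hz HT. eapply Rle_trans; [|apply (egf_term_le n N 0); auto; lia].
  simpl. rewrite Nat.add_0_r. apply Rmult_le_pos; [|lra]. apply Rmult_le_pos; [apply P_ge0|]; lra.
Qed.

Lemma is_derive_egf n N (T : R -> R) dT z : is_derive T z dT ->
  is_derive (fun z => egf n N z (T z)) z
    (egf_dP n N z (T z)
     + dT * sum_f_R0 (fun k => P (n + k) z * (INR k * T z ^ (k - 1)) / INR (Factorial.fact k)) N).
Proof.
  intros HT. unfold egf, egf_dP. rewrite scal_sum, <- sum_plus.
  apply (is_derive_sum_f_R0 (fun k z => P (n + k) z * T z ^ k / INR (Factorial.fact k))
    (fun k z => dP (n + k) z * T z ^ k / INR (Factorial.fact k)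
                + P (n + k) z * (INR k * T z ^ (k - 1)) / INR (Factorial.fact k) * dT)).
  intros k.
  apply (is_derive_ext (fun z => / INR (Factorial.fact k) * (P (n + k) z * T z ^ k)));
    [intros t; apply Rmult_comm|].
  replace (dP (n + k) z * T z ^ k / INR (Factorial.fact k)
           + P (n + k) z * (INR k * T z ^ (k - 1)) / INR (Factorial.fact k) * dT)
    with (/ INR (Factorial.fact k) * (dP (n + k) z * T z ^ k + P (n + k) z * (INR k * dT * T z ^ pred k)))
    by (replace (k - 1)%nat with (pred k) by lia; field; apply INR_fact_neq_0).
  apply is_derive_scal, (is_derive_mult (P (n + k)) (fun z => T z ^ k));
    [apply is_derive_P| apply (is_derive_pow T k z dT HT)| intros; apply Rmult_comm].
Qed.

(* Differentiating the time variable shifts the index, and [P_S] closes the system. *)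
Lemma egf_shift n N z T :
  sum_f_R0 (fun k => P (n + k) z * (INR k * T ^ (k - 1)) / INR (Factorial.fact k)) (S N)
  = Q z * egf_dP n N z T + L z * egf n N z T.
Proof.
  rewrite sum_f_R0_shift. simpl (INR 0). unfold egf, egf_dP. rewrite !scal_sum, <- sum_plus.
  rewrite Rmult_0_l, Rmult_0_r. unfold Rdiv at 1. rewrite Rmult_0_l, Rplus_0_l.
  apply sum_eq. intros j _.
  replace (n + S j)%nat with (S (n + j)) by lia. replace (S j - 1)%nat with j by lia.
  rewrite P_S, fact_simpl, mult_INR.
  field. split; [apply INR_fact_neq_0| apply not_0_INR; lia].
Qed.

(* Along the characteristic [T = tauQ z - tauQ Y] only the last term and a damping term survive. *)
Lemma is_derive_egf_char n N Y z : 0 < z ->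
  is_derive (fun z => egf n (S N) z (tauQ z - tauQ Y)) z
    (dP (n + S N) z * (tauQ z - tauQ Y) ^ S N / INR (Factorial.fact (S N))
     - L z / Q z * egf n N z (tauQ z - tauQ Y)).
Proof.
  intros Hz.
  assert (HT : is_derive (fun z => tauQ z - tauQ Y) z (- / Q z)).
  { replace (- / Q z) with (- / Q z - 0) by ring.
    apply (is_derive_minus tauQ (fun _ => tauQ Y)); [apply is_derive_tauQ; auto| auto_derive; auto]. }
  pose proof (is_derive_egf n (S N) _ _ z HT) as H. rewrite egf_shift in H.
  replace (egf_dP n (S N) z (tauQ z - tauQ Y) + - / Q z *
      (Q z * egf_dP n N z (tauQ z - tauQ Y) + L z * egf n N z (tauQ z - tauQ Y)))
    with (dP (n + S N) z * (tauQ z - tauQ Y) ^ S N / INR (Factorial.fact (S N))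
      - L z / Q z * egf n N z (tauQ z - tauQ Y)) in H; auto.
  unfold egf_dP at 1. cbn [sum_f_R0]. fold (egf_dP n N z (tauQ z - tauQ Y)).
  pose proof (Q_pos z Hz). field. repeat split; try apply INR_fact_neq_0; lra.
Qed.

Lemma is_derive_exp_tauQ K y z : 0 < z ->
  is_derive (fun z => exp (K * (tauQ y - tauQ z))) z (K / Q z * exp (K * (tauQ y - tauQ z))).
Proof.
  intros Hz.
  apply (is_derive_ext (fun z => exp (K * tauQ y - K * tauQ z))); [intros t; f_equal; ring|].
  replace (K / Q z * exp (K * (tauQ y - tauQ z))) with ((0 - K * (- / Q z)) * exp (K * tauQ y - K * tauQ z))
    by (f_equal; [field; pose proof (Q_pos z Hz); lra| f_equal; ring]).
  apply (is_derive_comp exp (fun z => K * tauQ y - K * tauQ z)); [apply is_derive_exp|].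
  apply (is_derive_minus (fun _ => K * tauQ y) (fun z => K * tauQ z)); [auto_derive; auto|].
  apply is_derive_scal, is_derive_tauQ; auto.
Qed.

(* Gronwall along the characteristic through [Y]: [egf * exp (L(Y) (tau y - tau z))] increases. *)
Lemma transport_upper n N y Y : 0 < y -> y <= Y ->
  egf n N y (tauQ y - tauQ Y) <= exp (L Y * (tauQ y - tauQ Y)) * P n Y.
Proof.
  intros Hy HyY.
  set (T := fun z => tauQ z - tauQ Y).
  set (E := fun z => exp (L Y * (tauQ y - tauQ z))).
  set (top := fun z => dP (n + S N) z * T z ^ S N / INR (Factorial.fact (S N))).
  assert (Hmono : egf n (S N) y (T y) * E y <= egf n (S N) Y (T Y) * E Y).
  { apply (le_of_derive_nonneg (fun z => egf n (S N) z (T z) * E z) (fun z => (top z - L z / Q z * egf n N z (T z)) * E z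
                                           + egf n (S N) z (T z) * (L Y / Q z * E z)) y Y); auto.
    - intros z Hz. apply (is_derive_mult (fun z => egf n (S N) z (T z)) E);
        [apply is_derive_egf_char; lra| apply is_derive_exp_tauQ; lra| intros; apply Rmult_comm].
    - intros z Hz.
      assert (HT : 0 <= T z) by (apply tauQ_sub_le; lra).
      pose proof (Q_pos z ltac:(lra)). pose proof (exp_pos (L Y * (tauQ y - tauQ z))).
      assert (0 <= top z).
      { apply Rmult_le_pos; [apply Rmult_le_pos; [apply dP_ge0; lra| apply pow_le; auto]|].
        apply Rlt_le, Rinv_0_lt_compat, INR_fact_lt_0. }
      assert (L z * egf n N z (T z) <= L Y * egf n (S N) z (T z)).
      { pose proof (egf_ge0 n N z (T z) ltac:(lra) HT). pose proof (L_ge0 z ltac:(lra)).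
        pose proof (L_le z Y ltac:(lra)).
        pose proof (egf_le_S n N z (T z) ltac:(lra) HT). apply Rmult_le_compat; lra. }
      unfold E. replace ((top z - L z / Q z * egf n N z (T z)) * exp (L Y * (tauQ y - tauQ z)) +
        egf n (S N) z (T z) * (L Y / Q z * exp (L Y * (tauQ y - tauQ z)))) with
        (exp (L Y * (tauQ y - tauQ z)) * (top z + / Q z * (L Y * egf n (S N) z (T z) - L z * egf n N z (T z))))
        by (field; lra).
      apply Rmult_le_pos; [lra|]. apply Rplus_le_le_0_compat; auto.
      apply Rmult_le_pos; [apply Rlt_le, Rinv_0_lt_compat|]; lra. }
  unfold T, E in Hmono. rewrite !Rminus_diag, Rmult_0_r, exp_0, Rmult_1_r, egf_at_0 in Hmono.
  rewrite Rmult_comm. eapply Rle_trans; [|exact Hmono].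
  apply egf_le_S; [lra| apply tauQ_sub_le; auto].
Qed.

Lemma transport_lower n N x Y B : 0 < x -> x <= Y ->
  (forall z, x <= z <= Y -> dP (n + S N) z * (tauQ z - tauQ Y) ^ S N / INR (Factorial.fact (S N)) <= B) ->
  P n Y - egf n (S N) x (tauQ x - tauQ Y) <= B * (Y - x).
Proof.
  intros Hx HxY HB. rewrite <- (egf_at_0 n (S N) Y), <- (Rminus_diag (tauQ Y)).
  apply (sub_le_of_derive_le (fun z => egf n (S N) z (tauQ z - tauQ Y))
    (fun z => dP (n + S N) z * (tauQ z - tauQ Y) ^ S N / INR (Factorial.fact (S N))
              - L z / Q z * egf n N z (tauQ z - tauQ Y))); auto.
  - intros z Hz. apply is_derive_egf_char. lra.
  - intros z Hz. specialize (HB z Hz).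
    assert (0 <= L z / Q z * egf n N z (tauQ z - tauQ Y)); [|lra].
    apply Rmult_le_pos; [apply Rdiv_le_0_compat; [apply L_ge0| apply Q_pos]; lra|].
    apply egf_ge0; [lra| apply tauQ_sub_le; lra].
Qed.

Lemma Pfact_mul_pow_le m x Y : 0 < x -> x <= Y ->
  Pfact m x * (tauQ x - tauQ Y) ^ m <= exp (L Y * (tauQ x - tauQ Y)).
Proof.
  intros Hx HxY. pose proof (transport_upper 0 m x Y Hx HxY) as H. rewrite P_0, Rmult_1_r in H.
  eapply Rle_trans; [|exact H].
  unfold Pfact. replace (P m x / INR (Factorial.fact m) * (tauQ x - tauQ Y) ^ m)
    with (P (0 + m) x * (tauQ x - tauQ Y) ^ m / INR (Factorial.fact m)) by (simpl; field; apply INR_fact_neq_0).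
  apply egf_term_le; [lra| apply tauQ_sub_le; auto| lia].
Qed.

Lemma Pfact_gt0 m y : 0 < y -> 0 < Pfact m y.
Proof. intros. apply Rdiv_lt_0_compat; [apply P_gt0; auto| apply INR_fact_lt_0]. Qed.

Lemma Pfact_ge0 m y : 0 <= y -> 0 <= Pfact m y.
Proof. intros. apply Rmult_le_pos; [apply P_ge0; auto| apply Rlt_le, Rinv_0_lt_compat, INR_fact_lt_0]. Qed.

Lemma dP_mul_pow_le m z d Y : 0 < z -> 0 < d -> z + d <= Y ->
  dP m z * (tauQ (z + d) - tauQ Y) ^ m / INR (Factorial.fact m)
  <= exp (L Y * (tauQ (z + d) - tauQ Y)) / d.
Proof.
  intros Hz Hd HY.
  pose proof (Pfact_mul_pow_le m (z + d) Y ltac:(lra) HY) as H.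
  pose proof (dP_mul_le_P m z d ltac:(lra) Hd).
  assert (0 <= (tauQ (z + d) - tauQ Y) ^ m / INR (Factorial.fact m)).
  { apply Rmult_le_pos; [apply pow_le, tauQ_sub_le; lra| apply Rlt_le, Rinv_0_lt_compat, INR_fact_lt_0]. }
  apply Rmult_le_reg_l with d; auto. unfold Pfact in H.
  replace (d * (dP m z * (tauQ (z + d) - tauQ Y) ^ m / INR (Factorial.fact m)))
    with (d * dP m z * ((tauQ (z + d) - tauQ Y) ^ m / INR (Factorial.fact m))) by (unfold Rdiv; ring).
  replace (d * (exp (L Y * (tauQ (z + d) - tauQ Y)) / d)) with (exp (L Y * (tauQ (z + d) - tauQ Y)))
    by (field; lra).
  eapply Rle_trans; [apply Rmult_le_compat_r; eauto|].
  replace (P m (z + d) * ((tauQ (z + d) - tauQ Y) ^ m / INR (Factorial.fact m)))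
    with (P m (z + d) / INR (Factorial.fact m) * (tauQ (z + d) - tauQ Y) ^ m)
    by (field; apply INR_fact_neq_0).
  exact H.
Qed.

Lemma dP_tail_le_shift p N z d Y T t : 0 < z -> 0 < d -> z + d <= Y -> 0 <= T ->
  t = tauQ (z + d) - tauQ Y -> 0 < t ->
  dP (p + N) z * T ^ N / INR (Factorial.fact N)
  <= exp (L Y * t) / d * (INR (Factorial.fact p) * Binomial.C (p + N) N) * ((T / t) ^ N * (/ t) ^ p).
Proof.
  intros Hz Hd HY HT -> Ht. set (t := tauQ (z + d) - tauQ Y) in *.
  pose proof (dP_mul_pow_le (p + N) z d Y Hz Hd HY) as Hdp. fold t in Hdp.
  assert (Htm : 0 < t ^ (p + N)) by (apply pow_lt; auto).
  assert (HdP : dP (p + N) z <= exp (L Y * t) / d * INR (Factorial.fact (p + N)) / t ^ (p + N)).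
  { apply Rmult_le_reg_r with (t ^ (p + N) / INR (Factorial.fact (p + N))).
    { apply Rdiv_lt_0_compat; [auto| apply INR_fact_lt_0]. }
    replace (exp (L Y * t) / d * INR (Factorial.fact (p + N)) / t ^ (p + N) * (t ^ (p + N) / INR (Factorial.fact (p + N))))
      with (exp (L Y * t) / d) by (field; split; [apply INR_fact_neq_0| lra]).
    replace (dP (p + N) z * (t ^ (p + N) / INR (Factorial.fact (p + N))))
      with (dP (p + N) z * t ^ (p + N) / INR (Factorial.fact (p + N))) by (unfold Rdiv; ring).
    exact Hdp. }
  apply Rle_trans with (exp (L Y * t) / d * INR (Factorial.fact (p + N)) / t ^ (p + N) * T ^ N / INR (Factorial.fact N)).
  { unfold Rdiv. apply Rmult_le_compat_r; [apply Rlt_le, Rinv_0_lt_compat, INR_fact_lt_0|].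
    apply Rmult_le_compat_r; [apply pow_le|]; lra. }
  right. rewrite <- C_add_fact, pow_add, pow_div_distr, pow_inv by lra. field.
  repeat split; try apply INR_fact_neq_0; try lra; apply pow_nonzero; lra.
Qed.

Lemma far_shift x Y : 0 < x < Y -> exists d Y2, 0 < d /\ Y + d <= Y2 /\ tauQ Y2 <= tauQ Y / 4 /\
  forall z, x <= z -> tauQ z - tauQ (z + d) <= tauQ Y / 2.
Proof.
  intros [Hx HxY]. pose proof INR_a_pos as Ha'.
  assert (HtY : 0 < tauQ Y) by (apply tauQ_pos; lra).
  pose proof (Q_pos x Hx) as HQx.
  set (d := tauQ Y * Q x / 2).
  assert (Hd : 0 < d) by (unfold d; apply Rmult_lt_0_compat; [apply Rmult_lt_0_compat|]; lra).
  exists d, (Rmax (Y + d) (4 / (INR a * tauQ Y))).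
  split; [auto| split; [apply Rmax_l| split]].
  - pose proof (Rmax_r (Y + d) (4 / (INR a * tauQ Y))).
    eapply Rle_trans; [apply tauQ_le; apply Rlt_le_trans with (4 / (INR a * tauQ Y)); auto; apply Rdiv_lt_0_compat; nra|].
    replace (tauQ Y / 4) with (/ (INR a * (4 / (INR a * tauQ Y)))) by (field; lra).
    apply Rinv_le_contravar; [apply Rmult_lt_0_compat; [lra| apply Rdiv_lt_0_compat; nra]|].
    apply Rmult_le_compat_l; lra.
  - intros z Hz. destruct (tauQ_sub_le z (z + d) ltac:(lra) ltac:(lra)) as [_ H].
    eapply Rle_trans; [exact H|]. replace (z + d - z) with d by ring.
    apply Rmult_le_reg_r with (Q z); [apply Q_pos; lra|].
    replace (d / Q z * Q z) with d by (field; pose proof (Q_pos z ltac:(lra)); lra).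
    unfold d. assert (Q x <= Q z) by (apply Q_le; lra). nra.
Qed.

(* The tails of [egf_dP] along the characteristic through [Y] decay geometrically, uniformly on
   [[x, Y]]: compare with the characteristic through a farther point [Y2], shifted by [d]. *)
Lemma dP_tail_le p x Y : 0 < x < Y -> exists A0 q, 0 <= q < 1 /\
  forall N z, x <= z <= Y ->
  dP (p + N) z * (tauQ z - tauQ Y) ^ N / INR (Factorial.fact N) <= A0 * (Binomial.C (p + N) N * q ^ N).
Proof.
  intros HxY. destruct (far_shift x Y HxY) as [d [Y2 [Hd [HY2 [HtY2 Hshift]]]]]. destruct HxY as [Hx HxY].
  assert (HtY : 0 < tauQ Y) by (apply tauQ_pos; lra).
  assert (HtxY : tauQ Y <= tauQ x) by (pose proof (tauQ_sub_le x Y Hx ltac:(lra)); lra).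
  set (E0 := exp (L Y2 * tauQ x)).
  set (q := 1 - tauQ Y / (4 * tauQ x)).
  exists (E0 / d * (4 / tauQ Y) ^ p * INR (Factorial.fact p)), q. split.
  { unfold q. split; [apply Rmult_le_reg_r with (4 * tauQ x); [lra|]; field_simplify; lra|].
    assert (0 < tauQ Y / (4 * tauQ x)) by (apply Rdiv_lt_0_compat; lra). lra. }
  intros N z Hz.
  set (T := tauQ z - tauQ Y). set (t := tauQ (z + d) - tauQ Y2).
  assert (HT : 0 <= T) by (apply tauQ_sub_le; lra).
  assert (HtT : T + tauQ Y / 4 <= t) by (unfold T, t; specialize (Hshift z (proj1 Hz)); lra).
  assert (Htx : t <= tauQ x) by (unfold t; pose proof (tauQ_sub_le x (z + d) Hx ltac:(lra)); pose proof (tauQ_pos Y2 ltac:(lra)); lra).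
  assert (Ht : 0 < t) by lra.
  eapply Rle_trans; [apply (dP_tail_le_shift p N z d Y2 T t); auto; lra|].
  assert (HE : exp (L Y2 * t) <= E0) by (apply exp_le_mono, Rmult_le_compat_l; [apply L_ge0|]; lra).
  assert (Hq : T / t <= q).
  { apply Rle_trans with (1 - tauQ Y / (4 * t)).
    - apply Rmult_le_reg_r with t; auto. field_simplify; lra.
    - assert (tauQ Y / (4 * tauQ x) <= tauQ Y / (4 * t)); [|unfold q; lra].
      apply Rmult_le_compat_l; [lra|]. apply Rinv_le_contravar; lra. }
  assert (Hinv : (/ t) ^ p <= (4 / tauQ Y) ^ p).
  { apply pow_incr. split; [apply Rlt_le, Rinv_0_lt_compat; auto|].
    replace (4 / tauQ Y) with (/ (tauQ Y / 4)) by (field; lra). apply Rinv_le_contravar; lra. }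
  assert (HTq : (T / t) ^ N <= q ^ N) by (apply pow_incr; split; [apply Rdiv_le_0_compat|]; lra).
  assert (0 <= INR (Factorial.fact p) * Binomial.C (p + N) N) by (apply Rmult_le_pos; [apply pos_INR| apply C_nonneg]).
  assert (0 <= (T / t) ^ N) by (apply pow_le, Rdiv_le_0_compat; lra).
  assert (0 <= (/ t) ^ p) by (apply pow_le, Rlt_le, Rinv_0_lt_compat; auto).
  apply Rle_trans with (E0 / d * (INR (Factorial.fact p) * Binomial.C (p + N) N) * (q ^ N * (4 / tauQ Y) ^ p)).
  - apply Rmult_le_compat; [| |apply Rmult_le_compat_r|apply Rmult_le_compat]; auto.
    + apply Rmult_le_pos; [apply Rdiv_le_0_compat; [apply Rlt_le, exp_pos| lra]| auto].
    + apply Rmult_le_pos; auto.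
    + apply Rmult_le_compat_r; [apply Rlt_le, Rinv_0_lt_compat; auto| auto].
  - right. ring.
Qed.

Lemma P_le_egf_add p x Y eps : 0 < x < Y -> 0 < eps ->
  exists N, P p Y <= egf p N x (tauQ x - tauQ Y) + eps.
Proof.
  intros HxY Heps. destruct (dP_tail_le p x Y HxY) as [A0 [q [Hq Htail]]].
  set (eps' := Rmin (1 / 2) (eps / ((Y - x) * (Rabs A0 + 1)))).
  assert (He' : 0 < eps').
  { apply Rmin_glb_lt; [lra|]. apply Rdiv_lt_0_compat; auto.
    apply Rmult_lt_0_compat; [lra|]. pose proof (Rabs_pos A0). lra. }
  destruct (negbin_term_small p q eps' Hq He') as [[|N] HN].
  { rewrite Nat.add_0_r, C_0 in HN. simpl in HN. pose proof (Rmin_l (1 / 2) (eps / ((Y - x) * (Rabs A0 + 1)))).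
    fold eps' in H. lra. }
  exists (S N).
  pose proof (transport_lower p N x Y _ (proj1 HxY) (Rlt_le _ _ (proj2 HxY)) (fun z Hz => Htail (S N) z Hz)) as H.
  set (t := Binomial.C (p + S N) (S N) * q ^ S N) in *.
  assert (Ht : 0 <= t) by (apply Rmult_le_pos; [apply C_nonneg| apply pow_le; lra]).
  assert (Heps' : eps' * ((Y - x) * (Rabs A0 + 1)) <= eps).
  { apply Rmult_le_reg_r with (/ ((Y - x) * (Rabs A0 + 1))).
    { apply Rinv_0_lt_compat, Rmult_lt_0_compat; [lra|]. pose proof (Rabs_pos A0). lra. }
    rewrite Rmult_assoc, Rinv_r, Rmult_1_r; [apply Rmin_r|].
    apply Rgt_not_eq, Rmult_lt_0_compat; [lra|]. pose proof (Rabs_pos A0). lra. }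
  assert (A0 * t * (Y - x) <= eps).
  { apply Rle_trans with (eps' * ((Y - x) * (Rabs A0 + 1))); auto.
    pose proof (Rle_abs A0). pose proof (Rabs_pos A0).
    assert (A0 * t <= Rabs A0 * eps') by (apply Rle_trans with (Rabs A0 * t); [apply Rmult_le_compat_r|apply Rmult_le_compat_l]; lra).
    assert (0 <= Y - x) by lra. nra. }
  lra.
Qed.

(** * The pointwise limit *)

Lemma egf_eq_sum_Pfact p N x s :
  egf p N x s = INR (Factorial.fact p) * sum_f_R0 (fun k => Binomial.C (p + k) k * Pfact (p + k) x * s ^ k) N.
Proof.
  unfold egf. rewrite scal_sum. apply sum_eq. intros k _. unfold Pfact, Binomial.C.
  replace (p + k - k)%nat with p by lia. field. repeat split; apply INR_fact_neq_0.
Qed.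

Lemma Pfact_ge n Y : 0 <= Y -> (INR a * Y) ^ S n / (INR a * INR (S n)) <= Pfact (S n) Y.
Proof.
  intros HY. pose proof INR_a_pos. pose proof (P_ge_top n Y HY).
  unfold Pfact. rewrite fact_simpl, mult_INR.
  assert (0 < INR (Factorial.fact n)) by apply INR_fact_lt_0.
  assert (0 < INR (S n)) by (apply lt_0_INR; lia).
  apply Rle_trans with (INR a ^ n * INR (Factorial.fact n) * Y ^ S n / (INR (S n) * INR (Factorial.fact n))).
  - right. rewrite Rpow_mult_distr. simpl (INR a ^ S n). field. repeat split; lra.
  - apply Rmult_le_compat_r; auto. apply Rlt_le, Rinv_0_lt_compat, Rmult_lt_0_compat; auto.
Qed.

Lemma Pfact_S_le k x : 0 < x -> Pfact (S k) x <= (Q x / x + L x) * Pfact k x.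
Proof.
  intros Hx. pose proof (P_S_le k x Hx). unfold Pfact. rewrite fact_simpl, mult_INR.
  assert (0 < INR (Factorial.fact k)) by apply INR_fact_lt_0.
  assert (0 < INR (S k)) by (apply lt_0_INR; lia).
  apply Rmult_le_reg_r with (INR (S k) * INR (Factorial.fact k)); [apply Rmult_lt_0_compat; auto|].
  replace (P (S k) x / (INR (S k) * INR (Factorial.fact k)) * (INR (S k) * INR (Factorial.fact k)))
    with (P (S k) x) by (field; lra).
  replace ((Q x / x + L x) * (P k x / INR (Factorial.fact k)) * (INR (S k) * INR (Factorial.fact k)))
    with (INR (S k) * (Q x / x + L x) * P k x) by (field; lra).
  auto.
Qed.

Lemma Pfact_add_le x n d : 0 < x -> Pfact (n + d) x <= (Q x / x + L x + 1) ^ d * Pfact n x.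
Proof.
  intros Hx. assert (Hk : 0 <= Q x / x + L x).
  { apply Rplus_le_le_0_compat; [apply Rlt_le, Rdiv_lt_0_compat; [apply Q_pos|]; auto| apply L_ge0; lra]. }
  induction d; [rewrite Nat.add_0_r; simpl; lra|].
  replace (n + S d)%nat with (S (n + d)) by lia.
  eapply Rle_trans; [apply Pfact_S_le; auto|].
  pose proof (Pfact_ge0 (n + d) x ltac:(lra)). pose proof (Pfact_ge0 n x ltac:(lra)).
  simpl. apply Rle_trans with ((Q x / x + L x + 1) * Pfact (n + d) x).
  - apply Rmult_le_compat_r; lra.
  - rewrite Rmult_assoc. apply Rmult_le_compat_l; lra.
Qed.

(* Upper half of the pointwise limit: transport [Pfact n x] to a far point [Y'] with [tauQ Y'] tiny. *)
Lemma ln_Pfact_div_le x delta : 0 < x -> 0 < delta ->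
  exists N, forall n, (N <= n)%nat -> ln (Pfact n x) / INR n <= - ln (tauQ x) + delta.
Proof.
  intros Hx Hd. pose proof (tauQ_pos x Hx) as Htx. pose proof INR_a_pos.
  set (eta := 1 - exp (- delta / 2)).
  assert (Heta : 0 < eta).
  { unfold eta. assert (exp (- delta / 2) < 1) by (rewrite <- exp_0; apply exp_increasing; lra). lra. }
  set (Y' := Rmax x (/ (INR a * tauQ x * eta))).
  assert (HxY' : x <= Y') by apply Rmax_l.
  assert (HY'2 : / (INR a * tauQ x * eta) <= Y') by apply Rmax_r.
  assert (HtY' : tauQ Y' <= tauQ x * eta).
  { eapply Rle_trans; [apply tauQ_le; lra|].
    replace (tauQ x * eta) with (/ (INR a * / (INR a * tauQ x * eta))) by (field; repeat split; lra).
    apply Rinv_le_contravar; [apply Rmult_lt_0_compat; [lra| apply Rinv_0_lt_compat; repeat apply Rmult_lt_0_compat; lra]|].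
    apply Rmult_le_compat_l; lra. }
  set (s := tauQ x - tauQ Y').
  assert (Hs : tauQ x * exp (- delta / 2) <= s) by (unfold s, eta in *; lra).
  assert (Hs0 : 0 < s) by (pose proof (exp_pos (- delta / 2)); nra).
  set (K := L Y' * s).
  destruct (nat_above (Rmax 1 (2 * K / delta))) as [N HN].
  exists N. intros n Hn. apply le_INR in Hn.
  assert (Hn1 : 1 < INR n) by (pose proof (Rmax_l 1 (2 * K / delta)); lra).
  assert (HnK : 2 * K / delta < INR n) by (pose proof (Rmax_r 1 (2 * K / delta)); lra).
  pose proof (Pfact_mul_pow_le n x Y' Hx HxY') as Hup. fold s K in Hup.
  pose proof (Pfact_gt0 n x Hx).
  assert (Hl : ln (Pfact n x) + INR n * ln s <= K).
  { rewrite <- ln_pow, <- ln_mult, <- (ln_exp K) by (auto; apply pow_lt; auto).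
    apply ln_le; auto. apply Rmult_lt_0_compat; auto. apply pow_lt; auto. }
  assert (Hlt : ln (tauQ x) - delta / 2 <= ln s).
  { replace (ln (tauQ x) - delta / 2) with (ln (tauQ x * exp (- delta / 2)))
      by (rewrite ln_mult, ln_exp by (auto; apply exp_pos); field).
    apply ln_le; auto. apply Rmult_lt_0_compat; auto. apply exp_pos. }
  apply Rmult_le_reg_r with (INR n); [lra|].
  replace (ln (Pfact n x) / INR n * INR n) with (ln (Pfact n x)) by (field; lra).
  assert (INR n * (ln (tauQ x) - delta / 2) <= INR n * ln s) by (apply Rmult_le_compat_l; lra).
  assert (K <= INR n * (delta / 2)).
  { apply Rmult_lt_compat_r with (r := delta / 2) in HnK; [|lra].
    replace (2 * K / delta * (delta / 2)) with K in HnK by (field; lra). lra. }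
  nra.
Qed.

(* Since [A Y tauQ Y -> 1], the gap [tauQ Y - tauQ Y'] is of order [1 / (A Y)] for [Y' >> Y]. *)
Lemma window_points x rho th : 0 < x -> 0 < rho -> rho * tauQ x < 1 -> 0 < th < 1 ->
  exists Y Y', x < Y <= Y' /\ tauQ Y <= tauQ x / 2 /\ / (/ rho - tauQ x) <= th * (INR a * Y) /\
    th <= INR a * Y * (tauQ Y - tauQ Y').
Proof.
  intros Hx Hrho Hrt Hth. pose proof INR_a_pos as HA.
  pose proof (tauQ_pos x Hx) as Htx.
  set (gam := / rho - tauQ x).
  assert (Hgam : 0 < gam).
  { unfold gam. assert (tauQ x < / rho); [|lra].
    apply Rmult_lt_reg_l with rho; auto. rewrite Rinv_r; lra. }
  set (mu := (1 + th) / 2). assert (Hmu : 0 < 1 - mu) by (unfold mu; lra).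
  set (Y := Rmax (Rmax (x + 1) ((INR c + INR b) / ((1 - mu) * INR a))) (Rmax (2 / (INR a * tauQ x)) (/ (th * gam * INR a)))).
  assert (HY1 : x + 1 <= Y) by (unfold Y; eapply Rle_trans; apply Rmax_l).
  assert (HY2 : (INR c + INR b) / ((1 - mu) * INR a) <= Y)
    by (unfold Y; eapply Rle_trans; [apply Rmax_r| apply Rmax_l]).
  assert (HY3 : 2 / (INR a * tauQ x) <= Y) by (unfold Y; eapply Rle_trans; [apply Rmax_l| apply Rmax_r]).
  assert (HY4 : / (th * gam * INR a) <= Y) by (unfold Y; eapply Rle_trans; apply Rmax_r).
  set (Y' := Rmax (Y + 1) (2 * Y / (1 - th))).
  assert (HY'1 : Y + 1 <= Y') by apply Rmax_l.
  assert (HY'2 : 2 * Y / (1 - th) <= Y') by apply Rmax_r.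
  exists Y, Y'. repeat split; try lra.
  - eapply Rle_trans; [apply tauQ_le; lra|].
    replace (tauQ x / 2) with (/ (INR a * (2 / (INR a * tauQ x)))) by (field; lra).
    apply Rinv_le_contravar; [apply Rmult_lt_0_compat; [| apply Rdiv_lt_0_compat]; nra|].
    apply Rmult_le_compat_l; lra.
  - apply Rmult_le_reg_r with (gam / th); [apply Rdiv_lt_0_compat; lra|].
    replace (/ gam * (gam / th)) with (/ th) by (field; lra).
    replace (th * (INR a * Y) * (gam / th)) with (INR a * gam * Y) by (field; lra).
    apply Rmult_le_reg_l with (/ (INR a * gam)); [apply Rinv_0_lt_compat, Rmult_lt_0_compat; lra|].
    rewrite <- Rmult_assoc, Rinv_l, Rmult_1_l by (apply Rgt_not_eq, Rmult_lt_0_compat; lra).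
    replace (/ (INR a * gam) * / th) with (/ (th * gam * INR a)) by (field; lra). exact HY4.
  - assert (Hc1 : mu <= INR a * Y * tauQ Y).
    { apply tau_mul_ge; try apply pos_INR; auto; [unfold mu; lra| lra|].
      apply Rmult_le_reg_r with (/ ((1 - mu) * INR a)); [apply Rinv_0_lt_compat, Rmult_lt_0_compat; lra|].
      replace ((1 - mu) * INR a * Y * / ((1 - mu) * INR a)) with Y by (field; lra).
      exact HY2. }
    assert (Hc2 : INR a * Y * tauQ Y' <= (1 - th) / 2).
    { apply Rle_trans with (INR a * Y * / (INR a * Y')).
      { apply Rmult_le_compat_l; [apply Rmult_le_pos; lra| apply tauQ_le; lra]. }
      replace (INR a * Y * / (INR a * Y')) with (Y / Y') by (field; lra).
      apply Rmult_le_reg_r with (Y' * 2 / (1 - th)); [apply Rmult_lt_0_compat; [lra| apply Rinv_0_lt_compat; lra]|].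
      replace (Y / Y' * (Y' * 2 / (1 - th))) with (2 * Y / (1 - th)) by (field; lra).
      replace ((1 - th) / 2 * (Y' * 2 / (1 - th))) with Y' by (field; lra). lra. }
    unfold mu in Hc1. lra.
Qed.

(* If [Pfact m x < rho^m] throughout a window of indices
   [m ~ p / (1 - r)], the series [egf p _ x s] is too small to reach [P p Y] (the bulk of its
   terms lies in the window), contradicting [Pfact_ge] for large [p]. *)
Section Window.
Variables x rho u Y Y' : R.
Let cc := u ^ 2 / 8.
Let th := exp (- cc / 2).
Hypotheses (Hx : 0 < x) (Hrho : 0 < rho) (Hrt : rho * tauQ x < 1) (Hu : 0 < u <= 1 / 4)
  (HxY : x < Y) (HYY' : Y <= Y') (HtY : tauQ Y <= tauQ x / 2)
  (Hgam : / (/ rho - tauQ x) <= th * (INR a * Y)) (Hfar : th <= INR a * Y * (tauQ Y - tauQ Y')).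

Let s := tauQ x - tauQ Y.
Let tb := tauQ x - tauQ Y'.
Let r := s / tb.
Let U := exp (L Y' * tb).
Let K0 := / (1 - s * rho) + 4 * U / (1 - r).
Let up p k := if Rle_dec (INR p * (r + u) / (1 - r)) (INR k) then Binomial.C (p + k) k * r ^ k else 0.
Let low p k := if Rle_dec (INR k) (INR p * (r - u) / (1 - r)) then Binomial.C (p + k) k * r ^ k else 0.
Let Pfact_small_on_window p := forall m, / (1 - r) * INR p * (1 - u) < INR m < / (1 - r) * INR p * (1 + u) ->
  Pfact m x < rho ^ m.

Lemma th_bounds : 0 < th < 1.
Proof. split; [apply exp_pos|]. rewrite <- exp_0. apply exp_increasing. unfold cc. nra. Qed.

Lemma window_bounds : 0 < s < tb /\ 1 / 2 <= r < 1 /\ s * rho < 1.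
Proof.
  pose proof th_bounds. pose proof INR_a_pos.
  pose proof (tauQ_pos Y' ltac:(lra)). pose proof (tauQ_pos Y ltac:(lra)).
  assert (tauQ Y' < tauQ Y).
  { assert (0 < INR a * Y * (tauQ Y - tauQ Y')) by lra.
    assert (0 < INR a * Y) by (apply Rmult_lt_0_compat; lra). nra. }
  assert (Hs : 0 < s < tb) by (unfold s, tb; lra).
  split; [exact Hs| split; [unfold r; split|]].
  - apply Rmult_le_reg_r with tb; [lra|]. field_simplify; [unfold s, tb; lra| lra].
  - apply Rmult_lt_reg_r with tb; [lra|]. field_simplify; lra.
  - assert (s <= tauQ x) by (unfold s; lra). nra.
Qed.

Lemma window_term_le p k : Pfact_small_on_window p ->
  Binomial.C (p + k) k * Pfact (p + k) x * s ^ k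
  <= Binomial.C (p + k) k * rho ^ (p + k) * s ^ k + U / tb ^ p * (up p k + low p k).
Proof.
  intros Hng. destruct window_bounds as [Hs [Hr Hsr]].
  assert (HC := C_nonneg (p + k) k).
  assert (Hsk : 0 <= s ^ k) by (apply pow_le; lra).
  assert (Htp : 0 < tb ^ p) by (apply pow_lt; lra).
  assert (HUt : 0 <= U / tb ^ p) by (apply Rdiv_le_0_compat; [apply Rlt_le, exp_pos| auto]).
  assert (Hrk : 0 <= Binomial.C (p + k) k * r ^ k) by (apply Rmult_le_pos; [auto| apply pow_le; lra]).
  assert (Hup : 0 <= up p k) by (unfold up; destruct Rle_dec; lra).
  assert (Hlow : 0 <= low p k) by (unfold low; destruct Rle_dec; lra).
  assert (Hrho_k : 0 <= Binomial.C (p + k) k * rho ^ (p + k) * s ^ k)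
    by (apply Rmult_le_pos; [apply Rmult_le_pos; [auto| apply pow_le; lra]| auto]).
  assert (Hout : Binomial.C (p + k) k * Pfact (p + k) x * s ^ k <= U / tb ^ p * (Binomial.C (p + k) k * r ^ k)).
  { pose proof (Pfact_mul_pow_le (p + k) x Y' Hx ltac:(lra)) as H. fold tb U in H.
    assert (Htpk : 0 < tb ^ (p + k)) by (apply pow_lt; lra).
    replace (U / tb ^ p * (Binomial.C (p + k) k * r ^ k))
      with (Binomial.C (p + k) k * (U / tb ^ (p + k)) * s ^ k)
      by (unfold r; rewrite pow_div_distr, pow_add by lra; field; split; apply pow_nonzero; lra).
    apply Rmult_le_compat_r; auto. apply Rmult_le_compat_l; auto.
    apply Rmult_le_reg_r with (tb ^ (p + k)); auto. field_simplify; lra. }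
  destruct (Rle_dec (INR p * (r + u) / (1 - r)) (INR k)) as [HK2|HK2].
  { replace (up p k) with (Binomial.C (p + k) k * r ^ k) by (unfold up; destruct Rle_dec; tauto).
    assert (U / tb ^ p * (Binomial.C (p + k) k * r ^ k) <= U / tb ^ p * (Binomial.C (p + k) k * r ^ k + low p k))
      by (apply Rmult_le_compat_l; lra).
    lra. }
  destruct (Rle_dec (INR k) (INR p * (r - u) / (1 - r))) as [HK1|HK1].
  { replace (low p k) with (Binomial.C (p + k) k * r ^ k) by (unfold low; destruct Rle_dec; tauto).
    assert (U / tb ^ p * (Binomial.C (p + k) k * r ^ k) <= U / tb ^ p * (up p k + Binomial.C (p + k) k * r ^ k))
      by (apply Rmult_le_compat_l; lra).
    lra. }
  apply Rnot_le_lt in HK1. apply Rnot_le_lt in HK2.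
  assert (Hin : / (1 - r) * INR p * (1 - u) < INR (p + k) < / (1 - r) * INR p * (1 + u)).
  { rewrite plus_INR. split;
      apply Rmult_lt_reg_r with (1 - r); try lra; field_simplify; try lra;
      [apply Rmult_lt_compat_r with (r := 1 - r) in HK1| apply Rmult_lt_compat_r with (r := 1 - r) in HK2]; try lra;
      field_simplify in HK1; field_simplify in HK2; lra. }
  pose proof (Hng (p + k)%nat Hin).
  assert (Binomial.C (p + k) k * Pfact (p + k) x * s ^ k <= Binomial.C (p + k) k * rho ^ (p + k) * s ^ k).
  { apply Rmult_le_compat_r; auto. apply Rmult_le_compat_l; lra. }
  assert (0 <= U / tb ^ p * (up p k + low p k)) by (apply Rmult_le_pos; lra). lra.
Qed.
Lemma window_inside_le p N :
  sum_f_R0 (fun k => Binomial.C (p + k) k * rho ^ (p + k) * s ^ k) N <= (th * (INR a * Y)) ^ p * / (1 - s * rho).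
Proof.
  destruct window_bounds as [Hs [Hr Hsr]].
  replace (sum_f_R0 (fun k => Binomial.C (p + k) k * rho ^ (p + k) * s ^ k) N) with (rho ^ p * negbin_sum p N (s * rho))
    by (unfold negbin_sum; rewrite scal_sum; apply sum_eq; intros k _; rewrite pow_add, Rpow_mult_distr; ring).
  assert (Hsr0 : 0 < 1 - s * rho) by lra.
  apply Rle_trans with (rho ^ p * / (1 - s * rho) ^ S p).
  { apply Rmult_le_compat_l; [apply pow_le; lra| apply negbin_sum_le; split; [nra| lra]]. }
  replace (rho ^ p * / (1 - s * rho) ^ S p) with ((rho / (1 - s * rho)) ^ p * / (1 - s * rho))
    by (rewrite pow_div_distr by lra; simpl; field; split; [apply pow_nonzero|]; lra).
  apply Rmult_le_compat_r; [apply Rlt_le, Rinv_0_lt_compat; lra|].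
  apply pow_incr. split; [apply Rlt_le, Rdiv_lt_0_compat; lra|].
  eapply Rle_trans; [|exact Hgam].
  replace (rho / (1 - s * rho)) with (/ (/ rho - s)) by (field; lra).
  assert (tauQ x < / rho) by (apply Rmult_lt_reg_l with rho; [lra| rewrite Rinv_r; lra]).
  apply Rinv_le_contravar; [lra|]. pose proof (tauQ_pos Y ltac:(lra)). unfold s. lra.
Qed.

Lemma window_outside_le p N :
  U / tb ^ p * (sum_f_R0 (up p) N + sum_f_R0 (low p) N) <= (th * (INR a * Y)) ^ p * (4 * U / (1 - r)).
Proof.
  destruct window_bounds as [Hs [Hr Hsr]]. pose proof th_bounds.
  assert (HU : 0 < U) by apply exp_pos.
  assert (Hcc : exp (- INR p * cc) = exp (- cc) ^ p)
    by (rewrite (pow_eq_exp_ln (exp (- cc))), ln_exp by apply exp_pos; f_equal; ring).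
  assert (sum_f_R0 (up p) N <= 3 * exp (- INR p * cc) / (1 - r) ^ S p) by exact (negbin_upper_tail_le p N r u Hr Hu).
  assert (sum_f_R0 (low p) N <= exp (- INR p * cc) / (1 - r) ^ S p) by exact (negbin_lower_tail_le p N r u Hr Hu).
  apply Rle_trans with (U / tb ^ p * (4 * exp (- cc) ^ p / (1 - r) ^ S p)).
  { apply Rmult_le_compat_l; [apply Rdiv_le_0_compat; [lra| apply pow_lt; lra]|].
    rewrite <- Hcc. lra. }
  replace (U / tb ^ p * (4 * exp (- cc) ^ p / (1 - r) ^ S p))
    with ((exp (- cc) / (tb * (1 - r))) ^ p * (4 * U / (1 - r))).
  2:{ rewrite pow_div_distr, Rpow_mult_distr by (apply Rgt_not_eq, Rmult_lt_0_compat; lra).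
      rewrite <- tech_pow_Rmult. field. repeat split; try lra; apply pow_nonzero; lra. }
  apply Rmult_le_compat_r; [apply Rlt_le, Rdiv_lt_0_compat; lra|].
  apply pow_incr. split; [apply Rlt_le, Rdiv_lt_0_compat; [apply exp_pos| apply Rmult_lt_0_compat; lra]|].
  assert (E : tb * (1 - r) = tb - s) by (unfold r; field; lra).
  rewrite E. replace (tb - s) with (tauQ Y - tauQ Y') by (unfold tb, s; ring).
  assert (Hth2 : exp (- cc) = th * th) by (unfold th; rewrite <- exp_plus; f_equal; field).
  rewrite Hth2. apply Rmult_le_reg_r with (tauQ Y - tauQ Y'); [unfold s, tb in Hs; lra|].
  field_simplify; [|unfold s, tb in Hs; lra]. nra.
Qed.

Lemma window_Pfact_le p : Pfact_small_on_window p -> Pfact p Y <= (th * (INR a * Y)) ^ p * K0.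
Proof.
  intros Hng. destruct window_bounds as [Hs [Hr Hsr]].
  assert (Hsum : forall N, sum_f_R0 (fun k => Binomial.C (p + k) k * Pfact (p + k) x * s ^ k) N
                           <= (th * (INR a * Y)) ^ p * K0).
  { intros N. eapply Rle_trans; [apply sum_Rle; intros k _; apply (window_term_le p k Hng)|].
    rewrite sum_plus.
    replace (sum_f_R0 (fun k => U / tb ^ p * (up p k + low p k)) N)
      with (U / tb ^ p * (sum_f_R0 (up p) N + sum_f_R0 (low p) N))
      by (rewrite <- sum_plus, scal_sum; apply sum_eq; intros; ring).
    pose proof (window_inside_le p N). pose proof (window_outside_le p N). unfold K0. lra. }
  apply Rnot_lt_le. intros Hlt.
  assert (Hf : 0 < INR (Factorial.fact p)) by apply INR_fact_lt_0.
  destruct (P_le_egf_add p x Y (INR (Factorial.fact p) * (Pfact p Y - (th * (INR a * Y)) ^ p * K0) / 2)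
              ltac:(lra) ltac:(apply Rmult_lt_0_compat; [apply Rmult_lt_0_compat|]; lra)) as [N HN].
  rewrite egf_eq_sum_Pfact in HN. fold s in HN. specialize (Hsum N).
  assert (P p Y = INR (Factorial.fact p) * Pfact p Y) by (unfold Pfact; field; lra).
  assert (INR (Factorial.fact p) * sum_f_R0 (fun k => Binomial.C (p + k) k * Pfact (p + k) x * s ^ k) N
          <= INR (Factorial.fact p) * ((th * (INR a * Y)) ^ p * K0)) by (apply Rmult_le_compat_l; lra).
  assert (INR (Factorial.fact p) * ((th * (INR a * Y)) ^ p * K0) < INR (Factorial.fact p) * Pfact p Y)
    by (apply Rmult_lt_compat_l; lra).
  lra.
Qed.

Lemma window_exists : exists p0, forall p, (p0 <= p)%nat -> exists m,
  / (1 - r) * INR p * (1 - u) < INR m < / (1 - r) * INR p * (1 + u) /\ rho ^ m <= Pfact m x.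
Proof.
  destruct window_bounds as [Hs [Hr Hsr]]. pose proof th_bounds. pose proof INR_a_pos.
  assert (HK0 : 0 < K0).
  { unfold K0. assert (0 < / (1 - s * rho)) by (apply Rinv_0_lt_compat; lra).
    assert (0 < 4 * U / (1 - r)) by (apply Rdiv_lt_0_compat; [pose proof (exp_pos (L Y' * tb)); unfold U; lra| lra]).
    lra. }
  assert (Hcc : 0 < cc / 2) by (unfold cc; nra).
  destruct (mul_exp_neg_lt_1 (INR a * K0) (cc / 2) Hcc) as [p0 Hp0].
  exists (S p0). intros p Hp.
  destruct (Classical_Prop.classic (exists m, / (1 - r) * INR p * (1 - u) < INR m < / (1 - r) * INR p * (1 + u)
                                         /\ rho ^ m <= Pfact m x)) as [Hex|Hnone]; [exact Hex|].
  exfalso.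
  assert (Hng : Pfact_small_on_window p) by (intros m Hm; apply Rnot_le_lt; intro; apply Hnone; eauto).
  pose proof (window_Pfact_le p Hng) as Hup. specialize (Hp0 p ltac:(lia)).
  destruct p as [|n]; [lia|].
  pose proof (Pfact_ge n Y ltac:(lra)) as Hlow.
  assert (Hthp : th ^ S n = exp (- INR (S n) * (cc / 2))).
  { unfold th. rewrite (pow_eq_exp_ln (exp (- cc / 2))), ln_exp by apply exp_pos. f_equal. field. }
  rewrite Rpow_mult_distr, Hthp in Hup.
  assert (Hp1 : 0 < INR (S n)) by (apply lt_0_INR; lia).
  assert (HAY : 0 < (INR a * Y) ^ S n) by (apply pow_lt, Rmult_lt_0_compat; lra).
  assert (1 <= INR a * K0 * INR (S n) * exp (- INR (S n) * (cc / 2))); [|lra].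
  apply Rmult_le_reg_r with ((INR a * Y) ^ S n / (INR a * INR (S n))).
  { apply Rdiv_lt_0_compat; auto. apply Rmult_lt_0_compat; lra. }
  replace (INR a * K0 * INR (S n) * exp (- INR (S n) * (cc / 2)) * ((INR a * Y) ^ S n / (INR a * INR (S n))))
    with (exp (- INR (S n) * (cc / 2)) * (INR a * Y) ^ S n * K0) by (field; lra).
  lra.
Qed.

End Window.

Lemma window x rho u : 0 < x -> 0 < rho -> rho * tauQ x < 1 -> 0 < u <= 1 / 4 ->
  exists lam, 0 < lam /\ exists p0, forall p, (p0 <= p)%nat -> exists m,
    lam * INR p * (1 - u) < INR m < lam * INR p * (1 + u) /\ rho ^ m <= Pfact m x.
Proof.
  intros Hx Hrho Hrt Hu.
  assert (Hth : 0 < exp (- (u ^ 2 / 8) / 2) < 1).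
  { split; [apply exp_pos|]. rewrite <- exp_0. apply exp_increasing. nra. }
  destruct (window_points x rho _ Hx Hrho Hrt Hth) as [Y [Y' [[HxY HYY'] [HtY [Hgam Hfar]]]]].
  destruct (window_bounds x rho u Y Y') as [_ [Hr _]]; auto.
  exists (/ (1 - (tauQ x - tauQ Y) / (tauQ x - tauQ Y'))). split; [apply Rinv_0_lt_compat; lra|].
  apply (window_exists x rho u Y Y'); auto.
Qed.

Lemma ln_Pfact_ge x rho n m : 0 < x -> 0 < rho -> (n <= m)%nat -> rho ^ m <= Pfact m x ->
  INR m * ln rho - (INR m - INR n) * ln (Q x / x + L x + 1) <= ln (Pfact n x).
Proof.
  intros Hx Hrho Hnm Hgm. set (kap := Q x / x + L x + 1).
  assert (Hkap : 1 <= kap).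
  { unfold kap. pose proof (Q_pos x Hx). pose proof (L_ge0 x ltac:(lra)).
    assert (0 < Q x / x) by (apply Rdiv_lt_0_compat; auto). lra. }
  pose proof (Pfact_add_le x n (m - n) Hx) as Hit. replace (n + (m - n))%nat with m in Hit by lia. fold kap in Hit.
  pose proof (Pfact_gt0 n x Hx).
  assert (Hkp : 0 < kap ^ (m - n)) by (apply pow_lt; lra).
  rewrite <- minus_INR, <- !ln_pow by (auto; lra).
  rewrite <- ln_div by (apply pow_lt; lra).
  apply ln_le; [apply Rdiv_lt_0_compat; apply pow_lt; lra|].
  apply Rmult_le_reg_r with (kap ^ (m - n)); auto. field_simplify; lra.
Qed.

Lemma ln_Pfact_div_ge x delta : 0 < x -> 0 < delta ->
  exists N, forall n, (N <= n)%nat -> - ln (tauQ x) - delta <= ln (Pfact n x) / INR n.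
Proof.
  intros Hx Hd. pose proof (tauQ_pos x Hx) as Htx.
  set (rho := exp (- delta / 2) / tauQ x).
  assert (Hrho : 0 < rho) by (apply Rdiv_lt_0_compat; [apply exp_pos| auto]).
  assert (Hrt : rho * tauQ x < 1).
  { unfold rho. replace (exp (- delta / 2) / tauQ x * tauQ x) with (exp (- delta / 2)) by (field; lra).
    rewrite <- exp_0. apply exp_increasing. lra. }
  assert (Hlnr : ln rho = - delta / 2 - ln (tauQ x)) by (unfold rho; rewrite ln_div, ln_exp; auto; apply exp_pos).
  set (kap := Q x / x + L x + 1).
  assert (Hlk : 0 <= ln kap).
  { rewrite <- ln_1. apply ln_le; [lra|]. unfold kap. pose proof (Q_pos x Hx). pose proof (L_ge0 x ltac:(lra)).
    assert (0 < Q x / x) by (apply Rdiv_lt_0_compat; auto). lra. }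
  set (Lam := Rabs (ln rho) + ln kap).
  assert (HLam : 0 <= Lam) by (unfold Lam; pose proof (Rabs_pos (ln rho)); lra).
  set (u := Rmin (1 / 4) (3 * delta / (32 * (Lam + 1)))).
  assert (Hu : 0 < u <= 1 / 4) by (split; [apply Rmin_glb_lt; [lra| apply Rdiv_lt_0_compat; lra]| apply Rmin_l]).
  assert (Hu2 : u <= 3 * delta / (32 * (Lam + 1))) by apply Rmin_r.
  destruct (window x rho u Hx Hrho Hrt Hu) as [lam [Hlam [p0 Hp0]]].
  destruct (nat_above (Rmax (lam * INR p0) (8 * lam * Lam / delta))) as [N HN].
  exists N. intros n Hn. apply le_INR in Hn.
  destruct (window_index_bounds lam u p0 n Hlam Hu) as [p [Hpp0 Hwin]];
    [pose proof (Rmax_l (lam * INR p0) (8 * lam * Lam / delta)); lra|].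
  destruct (Hp0 p Hpp0) as [m [Hm Hgm]]. destruct (Hwin m Hm) as [Hmn Hmd].
  assert (Hn0 : 0 < INR n) by (pose proof (pos_INR n); pose proof (Rmax_l (lam * INR p0) (8 * lam * Lam / delta));
    pose proof (pos_INR p0); assert (0 <= lam * INR p0) by (apply Rmult_le_pos; lra); lra).
  pose proof (ln_Pfact_ge x rho n m Hx Hrho ltac:(apply INR_le; lra) Hgm) as Hln. fold kap in Hln.
  assert (HlnA : INR n * ln rho - (INR m - INR n) * Lam <= INR m * ln rho - (INR m - INR n) * ln kap).
  { unfold Lam. pose proof (Rle_abs (- ln rho)). rewrite Rabs_Ropp in *. nra. }
  assert (Hu3 : (8 * u / 3) * Lam <= delta / 4).
  { apply Rle_trans with ((8 / 3) * (3 * delta / (32 * (Lam + 1))) * Lam); [apply Rmult_le_compat_r; lra|].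
    apply Rmult_le_reg_r with (32 * (Lam + 1)); [lra|]. field_simplify; [|lra]. nra. }
  assert (Hl2 : 2 * lam * Lam <= INR n * (delta / 4)).
  { pose proof (Rmax_r (lam * INR p0) (8 * lam * Lam / delta)).
    assert (8 * lam * Lam / delta * delta <= INR n * delta) by (apply Rmult_le_compat_r; lra).
    replace (8 * lam * Lam / delta * delta) with (8 * lam * Lam) in H0 by (field; lra). lra. }
  assert ((INR m - INR n) * Lam <= (INR n * (8 * u / 3) + 2 * lam) * Lam) by (apply Rmult_le_compat_r; lra).
  apply Rmult_le_reg_r with (INR n); auto.
  replace (ln (Pfact n x) / INR n * INR n) with (ln (Pfact n x)) by (field; lra).
  rewrite Hlnr in HlnA. nra.
Qed.

(** * Locally uniform convergence *)

Lemma ln_Pfact_div_cv y d : 0 < y -> 0 < d ->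
  exists N, forall n, (N <= n)%nat -> Rabs (ln (Pfact n y) / INR n - - ln (tauQ y)) <= d.
Proof.
  intros Hy Hd.
  destruct (ln_Pfact_div_ge y d Hy Hd) as [N1 H1]. destruct (ln_Pfact_div_le y d Hy Hd) as [N2 H2].
  exists (Nat.max N1 N2). intros n Hn. specialize (H1 n ltac:(lia)). specialize (H2 n ltac:(lia)).
  apply Rabs_le. lra.
Qed.

(* Also for [n = 0], where [/ INR 0 = 0]. *)
Lemma ln_Pfact_div_le_mono n y z : 0 < y -> y <= z -> ln (Pfact n y) / INR n <= ln (Pfact n z) / INR n.
Proof.
  intros Hy Hyz. apply Rmult_le_compat_r.
  - destruct n; [simpl; rewrite Rinv_0; lra|]. apply Rlt_le, Rinv_0_lt_compat, lt_0_INR. lia.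
  - apply ln_le; [apply Pfact_gt0; auto|]. apply Rmult_le_compat_r; [apply Rlt_le, Rinv_0_lt_compat, INR_fact_lt_0|].
    apply P_le; lra.
Qed.

Lemma neg_ln_tauQ_sub_le y1 y2 y z : 0 < y1 -> y1 <= y -> y <= z -> z <= y2 ->
  - ln (tauQ z) - - ln (tauQ y) <= / (Q y1 * tauQ y2) * (z - y).
Proof.
  intros Hy1 H1 H2 H3.
  pose proof (tauQ_pos z ltac:(lra)). pose proof (tauQ_pos y2 ltac:(lra)). pose proof (Q_pos y1 Hy1).
  pose proof (Q_le y1 y ltac:(lra) H1). destruct (tauQ_sub_le y z ltac:(lra) H2) as [_ Htz].
  destruct (tauQ_sub_le z y2 ltac:(lra) H3) as [Hz2 _].
  replace (- ln (tauQ z) - - ln (tauQ y)) with (ln (tauQ y / tauQ z)) by (rewrite ln_div; [ring| apply tauQ_pos; lra| auto]).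
  eapply Rle_trans; [apply ln_le_sub_1, Rdiv_lt_0_compat; [apply tauQ_pos|]; lra|].
  replace (tauQ y / tauQ z - 1) with ((tauQ y - tauQ z) / tauQ z) by (field; lra).
  apply Rle_trans with ((z - y) / Q y / tauQ z).
  { apply Rmult_le_compat_r; [apply Rlt_le, Rinv_0_lt_compat|]; lra. }
  replace ((z - y) / Q y / tauQ z) with (/ (Q y * tauQ z) * (z - y)) by (field; lra).
  apply Rmult_le_compat_r; [lra|]. apply Rinv_le_contravar; [apply Rmult_lt_0_compat; lra|].
  apply Rmult_le_compat; lra.
Qed.

Lemma ln_Pfact_div_unif y1 y2 d : 0 < y1 -> y1 <= y2 -> 0 < d ->
  exists N, forall n, (N <= n)%nat -> forall y, y1 <= y <= y2 ->
    Rabs (ln (Pfact n y) / INR n - - ln (tauQ y)) <= d.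
Proof.
  intros Hy1 Hy12 Hd.
  apply (uniform_of_pointwise_monotone (fun n y => ln (Pfact n y) / INR n) (fun y => - ln (tauQ y))
           y1 y2 (/ (Q y1 * tauQ y2))); auto.
  - apply Rlt_le, Rinv_0_lt_compat, Rmult_lt_0_compat; [apply Q_pos| apply tauQ_pos]; lra.
  - intros n y z Hyz Hz. apply ln_Pfact_div_le_mono; lra.
  - intros y z Hyz Hz. apply neg_ln_tauQ_sub_le; lra.
  - intros y Hy d' Hd'. apply ln_Pfact_div_cv; lra.
Qed.

End Motzkin.

Theorem lemma4p1 (a b c al0 be0 ga0 : nat)
  (Hbal : be0 = b) (HA : (0 < a)%nat) (Hal0 : (0 < al0)%nat) :
  forall M eps : R, 0 < M -> 0 < eps ->
  exists N : nat, forall n : nat, (N <= n)%nat ->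
  forall theta : R, Rabs theta <= M ->
  Rabs (/ INR n * ln (Pn a b c al0 be0 ga0 n (exp theta) / Pn a b c al0 be0 ga0 n 1)
        - ln (tau (INR a) (INR c) (INR b) 1 / tau (INR a) (INR c) (INR b) (exp theta)))
  < eps.
Proof.
  intros M eps HM Heps. subst be0.
  destruct (ln_Pfact_div_unif a b c al0 ga0 HA Hal0 (exp (- M)) (exp M) (eps / 3)) as [N HN];
    [apply exp_pos| apply exp_le_mono; lra| lra|].
  exists (Nat.max N 1). intros n Hn theta Hth. apply Rabs_le_between in Hth.
  set (x := exp theta).
  assert (Hx : exp (- M) <= x <= exp M) by (unfold x; split; apply exp_le_mono; lra).
  assert (H1 : exp (- M) <= 1 <= exp M) by (rewrite <- exp_0; split; apply exp_le_mono; lra).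
  pose proof (HN n ltac:(lia) x Hx) as Ex. pose proof (HN n ltac:(lia) 1 H1) as E1.
  pose proof (exp_pos theta) as Hx0. fold x in Hx0.
  pose proof (Pfact_gt0 a b c al0 ga0 HA Hal0 n x Hx0). pose proof (Pfact_gt0 a b c al0 ga0 HA Hal0 n 1 Rlt_0_1).
  pose proof (tauQ_pos a b c HA x Hx0). pose proof (tauQ_pos a b c HA 1 Rlt_0_1).
  pose proof (P_gt0 a b c al0 ga0 HA Hal0 n 1 Rlt_0_1).
  assert (Hn0 : 0 < INR n) by (apply lt_0_INR; lia).
  replace (Pn a b c al0 b ga0 n x / Pn a b c al0 b ga0 n 1) with (Pfact a b c al0 ga0 n x / Pfact a b c al0 ga0 n 1)
    by (unfold Pfact, P in *; field; split; [lra| apply INR_fact_neq_0]).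
  fold (tauQ a b c 1) (tauQ a b c x). rewrite !ln_div by auto.
  replace (/ INR n * (ln (Pfact a b c al0 ga0 n x) - ln (Pfact a b c al0 ga0 n 1)) - (ln (tauQ a b c 1) - ln (tauQ a b c x)))
    with ((ln (Pfact a b c al0 ga0 n x) / INR n - - ln (tauQ a b c x))
          - (ln (Pfact a b c al0 ga0 n 1) / INR n - - ln (tauQ a b c 1))) by (field; lra).
  eapply Rle_lt_trans; [apply Rabs_triang|]. rewrite Rabs_Ropp. lra.
Qed.
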